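(* Let $n\ge1$, let $\mathcal{I}\in\{\mathcal{N},\mathcal{M}\}$ and let $\kappa$ be a cardinal. If $\mathrm{cov}(\mathcal{I})=\mathrm{cof}(\mathcal{I})=\kappa$, then there exists a linear subspace $H$ of $\mathbb{R}^n$, considered as a vector space over $\mathbb{Q}$, which is a $\kappa$-Luzin set for $\mathcal{I}$.
   Context: $\mathcal{N}$ is the $\sigma$-ideal of Lebesgue null subsets of $\mathbb{R}^n$, and $\mathcal{M}$ is the $\sigma$-ideal of meager subsets of $\mathbb{R}^n$. $\mathrm{cov}(\mathcal{I})=\min\{|\mathcal{F}|:\mathcal{F}\subseteq\mathcal{I},\ \bigcup\mathcal{F}=\mathbb{R}^n\}$. $\mathrm{cof}(\mathcal{I})=\min\{|\mathcal{F}|:\mathcal{F}\subseteq\mathcal{I},\ \forall A\in\mathcal{I}\ \exists B\in\mathcal{F}\ A\subseteq B\}$. A $\kappa$-Luzin set for $\mathcal{I}$ is a set $L\subseteq\mathbb{R}^n$ with $|L|\ge\kappa$ such that $|L\cap B|<\kappa$ for every $B\in\mathcal{I}$. *)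

From Stdlib Require Import Reals QArith Qreals.
Open Scope R_scope.

(* Points of R^n are represented as functions nat -> R vanishing at all
   coordinates i >= n.  A "set" is a predicate on nat -> R. *)
Definition Rn (n : nat) (x : nat -> R) : Prop := forall i, (n <= i)%nat -> x i = 0.

Definition pset := (nat -> R) -> Prop.

Fixpoint prodR (n : nat) (f : nat -> R) : R :=
  match n with O => 1 | S m => prodR m f * f m end.
Fixpoint sumR (n : nat) (f : nat -> R) : R :=
  match n with O => 0 | S m => sumR m f + f m end.

Definition in_box (n : nat) (a b x : nat -> R) : Prop :=
  forall i, (i < n)%nat -> a i <= x i <= b i.
Definition box_vol (n : nat) (a b : nat -> R) : R := prodR n (fun i => b i - a i).

Definition null_set (n : nat) (A : pset) : Prop :=
  (forall x, A x -> Rn n x) /\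
  forall eps, eps > 0 ->
    exists a b : nat -> nat -> R,
      (forall k i, a k i <= b k i) /\
      (forall x, A x -> exists k, in_box n (a k) (b k) x) /\
      (forall N, sumR N (fun k => box_vol n (a k) (b k)) <= eps).

Definition dist2 (n : nat) (x y : nat -> R) : R := sumR n (fun i => (x i - y i) ^ 2).
Definition ball (n : nat) (x : nat -> R) (r : R) (y : nat -> R) : Prop :=
  Rn n y /\ dist2 n x y < r ^ 2.
Definition closure (n : nat) (F : pset) (x : nat -> R) : Prop :=
  Rn n x /\ forall r, r > 0 -> exists y, F y /\ dist2 n x y < r ^ 2.
Definition nowhere_dense (n : nat) (F : pset) : Prop :=
  (forall x, F x -> Rn n x) /\
  ~ (exists x r, Rn n x /\ r > 0 /\ forall y, ball n x r y -> closure n F y).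
Definition meager_set (n : nat) (A : pset) : Prop :=
  (forall x, A x -> Rn n x) /\
  exists F : nat -> pset, (forall k, nowhere_dense n (F k)) /\
    (forall x, A x -> exists k, F k x).

Inductive ideal_kind := NullIdeal | MeagerIdeal.
Definition in_ideal (I : ideal_kind) (n : nat) (A : pset) : Prop :=
  match I with NullIdeal => null_set n A | MeagerIdeal => meager_set n A end.

Definition le_card (X Y : Type) : Prop :=
  exists f : X -> Y, forall u v, f u = f v -> u = v.
Definition lt_card (X Y : Type) : Prop := le_card X Y /\ ~ le_card Y X.

(* cov(I) = |K| : some K-indexed subfamily of I covers R^n, and every
   covering subfamily of I (indexed by any T) has size at least |K|. *)
Definition cov_is (I : ideal_kind) (n : nat) (K : Type) : Prop :=
  (exists F : K -> pset, (forall k, in_ideal I n (F k)) /\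
      (forall x, Rn n x -> exists k, F k x)) /\
  (forall (T : Type) (F : T -> pset), (forall t, in_ideal I n (F t)) ->
      (forall x, Rn n x -> exists t, F t x) -> le_card K T).

Definition cofinal (I : ideal_kind) (n : nat) {T : Type} (F : T -> pset) : Prop :=
  (forall t, in_ideal I n (F t)) /\
  (forall A, in_ideal I n A -> exists t, forall x, A x -> F t x).
Definition cof_is (I : ideal_kind) (n : nat) (K : Type) : Prop :=
  (exists F : K -> pset, cofinal I n F) /\
  (forall (T : Type) (F : T -> pset), cofinal I n F -> le_card K T).

Definition Q_subspace (n : nat) (H : pset) : Prop :=
  (forall x, H x -> Rn n x) /\
  H (fun _ => 0) /\
  (forall x y, H x -> H y -> H (fun i => x i + y i)) /\
  (forall (q : Q) x, H x -> H (fun i => Q2R q * x i)).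

Definition Luzin (I : ideal_kind) (n : nat) (K : Type) (L : pset) : Prop :=
  (forall x, L x -> Rn n x) /\
  le_card K {x | L x} /\
  (forall B, in_ideal I n B -> lt_card {x | L x /\ B x} K).

(* Well-order K so that every proper initial segment has size < |K|, fix a cofinal
   family (B_k) of ideal sets and choose points x_g by transfinite recursion: x_g avoids the
   Q-span of the earlier points and every set {y | q y + v in B_b} with b < g, q in Q \ {0}
   and v in that span.  Fewer than cov(I) ideal sets are forbidden at each stage (this is
   where |X * X| = |X| for infinite X is needed), so x_g exists.  Then the x_g are
   independent and any combination in B_b only involves points x_d with d <= b, so the span
   meets every ideal set in fewer than |K| points. *)

From Stdlib Require Import Reals QArith Qreals Lra Lia.
From Stdlib Require Import Classical ClassicalEpsilon FunctionalExtensionality PropExtensionality.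
From Stdlib Require Import Arith List Cantor Wellfounded.
From mathcomp Require ssrbool eqtype classical_sets wochoice boolp.
Set Bullet Behavior "Strict Subproofs".
Open Scope R_scope.

Lemma sumR_ext m f g : (forall i, (i < m)%nat -> f i = g i) -> sumR m f = sumR m g.
Proof. induction m; simpl; intros h; auto. rewrite IHm, h; auto. Qed.

Lemma sumR_le m f g : (forall i, (i < m)%nat -> f i <= g i) -> sumR m f <= sumR m g.
Proof.
  induction m; simpl; intros h; [lra|].
  pose proof (h m ltac:(lia)). pose proof (IHm ltac:(intros; apply h; lia)). lra.
Qed.

Lemma sumR_nonneg m f : (forall i, (i < m)%nat -> 0 <= f i) -> 0 <= sumR m f.
Proof.
  induction m; simpl; intros h; [lra|].
  pose proof (h m ltac:(lia)). pose proof (IHm ltac:(intros; apply h; lia)). lra.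
Qed.

Lemma sumR_zero m f : (forall i, (i < m)%nat -> f i = 0) -> sumR m f = 0.
Proof. induction m; simpl; intros h; [auto|]. rewrite IHm, h; [ring|lia|intros; apply h; lia]. Qed.

Lemma sumR_term m f i : (forall j, (j < m)%nat -> 0 <= f j) -> (i < m)%nat -> f i <= sumR m f.
Proof.
  induction m; simpl; intros h hi; [lia|].
  assert (0 <= sumR m f) by (apply sumR_nonneg; intros; apply h; lia).
  destruct (Nat.eq_dec i m) as [->|ne]; [lra|].
  pose proof (IHm ltac:(intros; apply h; lia) ltac:(lia)). pose proof (h m ltac:(lia)). lra.
Qed.

Lemma sumR_mono m M f : (forall i, 0 <= f i) -> (m <= M)%nat -> sumR m f <= sumR M f.
Proof. intros h hm. induction hm; simpl; [lra|]. pose proof (h m0). lra. Qed.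

Lemma sumR_plus m f g : sumR m (fun i => f i + g i) = sumR m f + sumR m g.
Proof. induction m; simpl; [ring|rewrite IHm; ring]. Qed.

Lemma sumR_scal m c f : sumR m (fun i => c * f i) = c * sumR m f.
Proof. induction m; simpl; [ring|rewrite IHm; ring]. Qed.

(* The geometric budget [eps (1/2 + ... + 1/2^M)] used to share [eps] among countably many sets. *)
Lemma sumR_geometric M eps : sumR M (fun k => eps * (/ 2) ^ (S k)) = eps * (1 - (/2) ^ M).
Proof.
  induction M; [simpl; ring|].
  change (sumR (S M) (fun k => eps * (/ 2) ^ (S k)))
    with (sumR M (fun k => eps * (/ 2) ^ (S k)) + eps * (/2) ^ (S M)).
  rewrite IHM. simpl. field.
Qed.

Lemma prodR_ext m f g : (forall i, (i < m)%nat -> f i = g i) -> prodR m f = prodR m g.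
Proof. induction m; simpl; intros h; auto. rewrite IHm, h; auto. Qed.

Lemma prodR_nonneg m f : (forall i, (i < m)%nat -> 0 <= f i) -> 0 <= prodR m f.
Proof.
  induction m; simpl; intros h; [lra|].
  apply Rmult_le_pos; [apply IHm; intros; apply h; lia|apply h; lia].
Qed.

Lemma prodR_pos m f : (forall i, (i < m)%nat -> 0 < f i) -> 0 < prodR m f.
Proof.
  induction m; simpl; intros h; [lra|].
  apply Rmult_lt_0_compat; [apply IHm; intros; apply h; lia|apply h; lia].
Qed.

Lemma prodR_mono m f g : (forall i, (i < m)%nat -> 0 <= f i <= g i) -> prodR m f <= prodR m g.
Proof.
  induction m; simpl; intros h; [lra|].
  assert (0 <= prodR m f) by (apply prodR_nonneg; intros; apply h; lia).
  pose proof (IHm ltac:(intros; apply h; lia)). pose proof (h m ltac:(lia)).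
  apply Rmult_le_compat; lra.
Qed.

Lemma prodR_scal m c f : prodR m (fun i => c * f i) = c ^ m * prodR m f.
Proof. induction m; simpl; [ring|rewrite IHm; ring]. Qed.

Lemma prodR_zero m f : (1 <= m)%nat -> f 0%nat = 0 -> prodR m f = 0.
Proof.
  intros h1 h2. induction m as [|[|m] IH]; [lia|simpl; rewrite h2; ring|].
  change (prodR (S (S m)) f) with (prodR (S m) f * f (S m)). rewrite IH; [ring|lia].
Qed.

Lemma dist2_nonneg n x y : 0 <= dist2 n x y.
Proof. apply sumR_nonneg; intros; apply pow2_ge_0. Qed.

Lemma dist2_coord n x y i : (i < n)%nat -> (x i - y i) ^ 2 <= dist2 n x y.
Proof. intros hi. apply (sumR_term n (fun i => (x i - y i) ^ 2)); auto. intros; apply pow2_ge_0. Qed.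

Lemma dist2_refl n x : dist2 n x x = 0.
Proof. apply sumR_zero. intros; ring. Qed.

Lemma dist2_affine n r h a b :
  dist2 n (fun i => r * a i + h i) (fun i => r * b i + h i) = r ^ 2 * dist2 n a b.
Proof. unfold dist2. rewrite <- sumR_scal. apply sumR_ext. intros; ring. Qed.

Lemma dist2_zero_eq n x y : Rn n x -> Rn n y -> dist2 n x y = 0 -> x = y.
Proof.
  intros hx hy h. apply functional_extensionality; intros i.
  destruct (le_lt_dec n i) as [hi|hi]; [rewrite hx, hy; auto|].
  pose proof (dist2_coord n x y i hi). pose proof (pow2_ge_0 (x i - y i)). nra.
Qed.

Lemma sq_lt_abs a b : 0 < b -> a ^ 2 < b ^ 2 -> Rabs a < b.
Proof. intros hb h. apply Rabs_def1; nra. Qed.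

Lemma dist2_bound n x y b : (forall i, (i < n)%nat -> Rabs (x i - y i) <= b) ->
  dist2 n x y <= INR n * b ^ 2.
Proof.
  intros h. apply Rle_trans with (sumR n (fun _ => b ^ 2)).
  - apply sumR_le. intros i hi. rewrite <- pow2_abs. apply pow_incr.
    pose proof (h i hi). pose proof (Rabs_pos (x i - y i)). lra.
  - clear h. induction n as [|m IH]; [simpl; lra|]. rewrite S_INR.
    change (sumR (S m) (fun _ => b ^ 2)) with (sumR m (fun _ => b ^ 2) + b ^ 2).
    rewrite Rmult_plus_distr_r. lra.
Qed.

Lemma dependent_choice {A : Type} (Inv : nat -> A -> Prop) (Step : nat -> A -> A -> Prop) (a0 : A) :
  Inv 0%nat a0 -> (forall k a, Inv k a -> exists b, Inv (S k) b /\ Step k a b) ->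
  exists s : nat -> A, forall k, Inv k (s k) /\ Step k (s k) (s (S k)).
Proof.
  intros h0 hstep.
  set (next := fun k a => epsilon (inhabits a0) (fun b => Inv k a -> Inv (S k) b /\ Step k a b)).
  assert (hnext : forall k a, Inv k a -> Inv (S k) (next k a) /\ Step k a (next k a)).
  { intros k a ha. apply (epsilon_spec (inhabits a0) (fun b => Inv k a -> Inv (S k) b /\ Step k a b)); auto.
    destruct (hstep k a ha) as [b hb]. exists b; auto. }
  set (s := fix s k := match k with O => a0 | S k => next k (s k) end).
  assert (hinv : forall k, Inv k (s k)) by (induction k; simpl; [auto|apply hnext; auto]).
  exists s. intros k. split; [apply hinv|apply (hnext k (s k) (hinv k))].
Qed.

Lemma lim_bound u l j a b : Un_cv u l -> (forall m, (m >= j)%nat -> Rabs (u m - a) <= b) ->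
  Rabs (l - a) <= b.
Proof.
  intros hu hb. destruct (Rle_lt_dec (Rabs (l - a)) b) as [h|h]; auto. exfalso.
  destruct (hu (Rabs (l - a) - b)) as [N hN]; [lra|].
  pose proof (hN (max N j) ltac:(lia)) as h1. pose proof (hb (max N j) ltac:(lia)) as h2.
  unfold R_dist in h1. rewrite Rabs_minus_sym in h1.
  pose proof (Rabs_triang (l - u (max N j)) (u (max N j) - a)) as t.
  replace (l - u (max N j) + (u (max N j) - a)) with (l - a) in t by ring. lra.
Qed.

Lemma halving_cauchy (u r : nat -> R) :
  (forall k, r (S k) <= r k / 2) -> (forall k, Rabs (u (S k) - u k) <= r k) ->
  exists l, forall j, Rabs (l - u j) <= 2 * r j.
Proof.
  intros hr hu.
  assert (rpos : forall k, 0 <= r k) by (intros k; pose proof (Rabs_pos (u (S k) - u k)); pose proof (hu k); lra).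
  assert (drift : forall j m, (j <= m)%nat -> Rabs (u m - u j) <= 2 * (r j - r m)).
  { intros j m hm. induction hm.
    - unfold Rminus. rewrite Rplus_opp_r, Rabs_R0. lra.
    - pose proof (Rabs_triang (u (S m) - u m) (u m - u j)) as t.
      replace (u (S m) - u m + (u m - u j)) with (u (S m) - u j) in t by ring.
      pose proof (hu m). pose proof (hr m). lra. }
  assert (rgeo : forall k, r k <= r 0%nat * (/2) ^ k).
  { induction k; simpl; [lra|]. pose proof (hr k). lra. }
  assert (cau : Cauchy_crit u).
  { intros eps he.
    destruct (pow_lt_1_zero (/2) ltac:(rewrite Rabs_right; lra) (eps / (4 * (r 0%nat + 1))))
      as [N hN]; [apply Rdiv_lt_0_compat; pose proof (rpos 0%nat); lra|].
    exists N. intros p q hp hq. unfold R_dist.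
    pose proof (drift N p hp). pose proof (drift N q hq). pose proof (rpos p). pose proof (rpos q).
    assert (hrN : r N < eps / 4).
    { pose proof (hN N (le_n N)) as h. rewrite Rabs_right in h by (apply Rle_ge, pow_le; lra).
      pose proof (rgeo N). pose proof (rpos 0%nat).
      assert (e : (r 0%nat + 1) * (eps / (4 * (r 0%nat + 1))) = eps / 4) by (field; lra).
      pose proof (pow_le (/2) N ltac:(lra)).
      pose proof (Rmult_lt_compat_l (r 0%nat + 1) _ _ ltac:(lra) h). nra. }
    pose proof (Rabs_triang (u p - u N) (u N - u q)) as t.
    replace (u p - u N + (u N - u q)) with (u p - u q) in t by ring.
    rewrite Rabs_minus_sym in H0. lra. }
  destruct (R_complete u cau) as [l hl]. exists l. intros j.
  apply (lim_bound u l j); auto. intros m hm. pose proof (drift j m hm). pose proof (rpos m). lra.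
Qed.

Lemma nested_limit n (C : nat -> nat -> R) (r : nat -> R) :
  (forall k, Rn n (C k)) -> (forall k, r (S k) <= r k / 2) ->
  (forall k i, Rabs (C (S k) i - C k i) <= r k) ->
  exists c, Rn n c /\ forall j i, Rabs (c i - C j i) <= 2 * r j.
Proof.
  intros hC hr hstep.
  assert (hc : forall i, exists l, ((n <= i)%nat -> l = 0) /\ forall j, Rabs (l - C j i) <= 2 * r j).
  { intros i. destruct (le_lt_dec n i) as [hi|hi].
    - exists 0. split; auto. intros j. rewrite (hC j i hi), Rminus_0_r, Rabs_R0.
      pose proof (hstep j i). pose proof (Rabs_pos (C (S j) i - C j i)). lra.
    - destruct (halving_cauchy (fun k => C k i) r hr (fun k => hstep k i)) as [l hl].
      exists l. split; [lia|auto]. }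
  set (c := fun i => proj1_sig (constructive_indefinite_description _ (hc i))).
  assert (hspec : forall i, ((n <= i)%nat -> c i = 0) /\ forall j, Rabs (c i - C j i) <= 2 * r j)
    by (intros i; exact (proj2_sig (constructive_indefinite_description _ (hc i)))).
  exists c. split; [intros i; apply hspec|intros j i; apply hspec].
Qed.

Definition upd (f : nat -> R) (i : nat) (v : R) : nat -> R :=
  fun j => if Nat.eqb j i then v else f j.

Lemma upd_same f i v : upd f i v i = v.
Proof. unfold upd. rewrite Nat.eqb_refl. auto. Qed.

Lemma upd_other f i v j : j <> i -> upd f i v j = f j.
Proof. intros h. unfold upd. destruct (Nat.eqb_spec j i); [contradiction|auto]. Qed.

Lemma sumR_single m f i : (i < m)%nat -> (forall j, j <> i -> f j = 0) -> sumR m f = f i.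
Proof.
  intros hi h. induction m as [|m IH]; [lia|]. simpl.
  destruct (Nat.eq_dec i m) as [->|ne].
  - rewrite sumR_zero by (intros j hj; apply h; lia). apply Rplus_0_l.
  - rewrite IH, (h m); [ring|lia|lia].
Qed.

Lemma dist2_upd n x i t : (i < n)%nat -> dist2 n x (upd x i (x i + t)) = t ^ 2.
Proof.
  intros hi. unfold dist2. rewrite (sumR_single n _ i hi).
  - rewrite upd_same. ring.
  - intros j hj. rewrite upd_other; auto. ring.
Qed.

Lemma closure_singleton n v y : Rn n v -> closure n (fun z => z = v) y -> y = v.
Proof.
  intros hv [hy h]. apply (dist2_zero_eq n); auto.
  pose proof (dist2_nonneg n y v). destruct (Req_dec (dist2 n y v) 0) as [e|ne]; auto.
  destruct (h (sqrt (dist2 n y v)) ltac:(apply sqrt_lt_R0; lra)) as [z [-> hz]].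
  rewrite pow2_sqrt in hz; lra.
Qed.

(* In positive dimension a point is nowhere dense: every ball holds two distinct points. *)
Lemma nowhere_dense_singleton n v : (1 <= n)%nat -> Rn n v -> nowhere_dense n (fun z => z = v).
Proof.
  intros hn hv. split; [intros x ->; auto|]. intros [x [r [hx [hr hball]]]].
  set (x' := upd x 0 (x 0%nat + r / 2)).
  assert (hx' : Rn n x') by (intros i hi; unfold x'; rewrite upd_other by lia; auto).
  assert (e1 : x = v).
  { apply (closure_singleton n); auto. apply hball. split; auto. rewrite dist2_refl. nra. }
  assert (e2 : x' = v).
  { apply (closure_singleton n); auto. apply hball. split; auto. unfold x'. rewrite dist2_upd by lia. nra. }
  assert (e : x 0%nat = x' 0%nat) by congruence.
  unfold x' in e. rewrite upd_same in e. lra.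
Qed.

Lemma nowhere_dense_affine n F r h : r <> 0 -> nowhere_dense n F ->
  nowhere_dense n (fun y => Rn n y /\ F (fun i => r * y i + h i)).
Proof.
  intros hr [hF hnd]. split; [tauto|]. intros [x [s [hx [hs hball]]]].
  destruct (classic (exists y0, Rn n y0 /\ F (fun i => r * y0 i + h i))) as [[y0 [hy0 hFy0]]|no].
  2:{ destruct (hball x) as [_ hc]; [split; auto; rewrite dist2_refl; nra|].
      destruct (hc s hs) as [z [hz _]]. apply no; eauto. }
  assert (hh : Rn n h).
  { intros i hi. pose proof (hF _ hFy0 i hi) as e. simpl in e. rewrite hy0 in e; auto. lra. }
  assert (r2 : 0 < r ^ 2) by nra.
  apply hnd. exists (fun i => r * x i + h i), (Rabs r * s). split; [|split].
  - intros i hi. rewrite hx, hh; auto; ring.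
  - apply Rmult_lt_0_compat; auto. apply Rabs_pos_lt; auto.
  - intros z [hz hd].
    set (w := fun i => (z i - h i) / r).
    assert (zw : z = fun i => r * w i + h i).
    { apply functional_extensionality; intros i; unfold w; field; auto. }
    assert (hw : Rn n w) by (intros i hi; unfold w; rewrite hz, hh; auto; field; auto).
    assert (hxw : dist2 n x w < s ^ 2).
    { rewrite zw, dist2_affine, Rpow_mult_distr, pow2_abs in hd.
      apply (Rmult_lt_reg_l (r ^ 2)); auto. }
    destruct (hball w (conj hw hxw)) as [_ hc].
    split; auto. intros e he.
    assert (hre : e / Rabs r > 0) by (apply Rdiv_lt_0_compat; auto; apply Rabs_pos_lt; auto).
    destruct (hc _ hre) as [u [[hu hFu] hdu]].
    exists (fun i => r * u i + h i). split; auto.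
    rewrite zw, dist2_affine.
    replace (e ^ 2) with (r ^ 2 * (e / Rabs r) ^ 2).
    + apply Rmult_lt_compat_l; auto.
    + rewrite <- (pow2_abs r). field. apply Rabs_no_R0; auto.
Qed.

Lemma meager_subset n A B : (forall x, A x -> B x) -> meager_set n B -> meager_set n A.
Proof. intros h [hB [F [hF hc]]]. split; [auto|]. exists F; split; auto. Qed.

Lemma meager_singleton n v : (1 <= n)%nat -> Rn n v -> meager_set n (fun y => y = v).
Proof.
  intros hn hv. split; [intros x ->; auto|]. exists (fun _ z => z = v). split.
  - intros; apply nowhere_dense_singleton; auto.
  - intros x hx; exists 0%nat; auto.
Qed.

Lemma meager_countable_union n (F : nat -> pset) :
  (forall k, meager_set n (F k)) -> meager_set n (fun y => exists k, F k y).
Proof.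
  intros H. split; [intros x [k hk]; apply (proj1 (H k)); auto|].
  set (G := fun k => proj1_sig (constructive_indefinite_description _ (proj2 (H k)))).
  assert (HG : forall k, (forall j, nowhere_dense n (G k j)) /\ forall x, F k x -> exists j, G k j x)
    by (intros k; exact (proj2_sig (constructive_indefinite_description _ (proj2 (H k))))).
  exists (fun m => G (fst (Cantor.of_nat m)) (snd (Cantor.of_nat m))). split.
  - intros m; apply HG.
  - intros x [k hk]. destruct (proj2 (HG k) x hk) as [j hj]. exists (Cantor.to_nat (k, j)).
    rewrite Cantor.cancel_of_to; auto.
Qed.

Lemma meager_affine n B h r : r <> 0 -> meager_set n B ->
  meager_set n (fun y => Rn n y /\ B (fun i => r * y i + h i)).
Proof.
  intros hr [hB [F [hF hc]]]. split; [tauto|].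
  exists (fun k y => Rn n y /\ F k (fun i => r * y i + h i)). split.
  - intros k; apply nowhere_dense_affine; auto.
  - intros y [hy hBy]. destruct (hc _ hBy) as [k hk]. exists k; auto.
Qed.

Lemma nowhere_dense_escape n F x r : nowhere_dense n F -> Rn n x -> r > 0 ->
  exists p s, Rn n p /\ dist2 n x p < r ^ 2 /\ s > 0 /\ forall z, F z -> s ^ 2 <= dist2 n p z.
Proof.
  intros [_ hnd] hx hr. apply NNPP; intro no. apply hnd. exists x, r. split; [auto|split; [auto|]].
  intros p [hp hd]. split; auto. intros s hs. apply NNPP; intro nz. apply no.
  exists p, s. repeat split; auto.
  intros z hz. destruct (Rle_lt_dec (s ^ 2) (dist2 n p z)); auto. exfalso; apply nz; eauto.
Qed.

Lemma baire_step n F c r : nowhere_dense n F -> Rn n c -> r > 0 ->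
  exists c' r', Rn n c' /\ 0 < r' <= r / 2 /\ (forall i, Rabs (c' i - c i) <= r) /\
    forall z, F z -> INR n * (2 * r') ^ 2 < dist2 n c' z.
Proof.
  intros hF hc hr. destruct (nowhere_dense_escape n F c r hF hc hr) as [p [s [hp [hcp [hs hfar]]]]].
  pose proof (pos_INR n) as hn.
  set (m := Rmin r s). assert (hm : 0 < m <= s /\ m <= r).
  { unfold m; pose proof (Rmin_l r s); pose proof (Rmin_r r s); pose proof (Rmin_pos r s hr hs); lra. }
  exists p, (m / (2 * (INR n + 1))). split; [auto|split; [split|split]].
  - apply Rdiv_lt_0_compat; lra.
  - unfold Rdiv. apply Rmult_le_compat; [lra|apply Rlt_le, Rinv_0_lt_compat; lra|lra|].
    apply Rinv_le_contravar; lra.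
  - intros i. destruct (le_lt_dec n i) as [hi|hi].
    + rewrite hp, hc by auto. rewrite Rminus_0_r, Rabs_R0. lra.
    + apply Rlt_le, sq_lt_abs; auto. pose proof (dist2_coord n c p i hi).
      replace ((p i - c i) ^ 2) with ((c i - p i) ^ 2) by ring. lra.
  - intros z hz. specialize (hfar z hz).
    replace (2 * (m / (2 * (INR n + 1)))) with (m / (INR n + 1)) by (field; lra).
    set (t := m / (INR n + 1)).
    assert (ht : t * (INR n + 1) = m) by (unfold t; field; lra).
    assert (0 < t) by (unfold t; apply Rdiv_lt_0_compat; lra).
    assert (INR n * t ^ 2 < m ^ 2) by (rewrite <- ht; nra).
    assert (m ^ 2 <= s ^ 2) by (apply pow_incr; lra). lra.
Qed.

Theorem baire n (F : nat -> pset) : (forall k, nowhere_dense n (F k)) ->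
  exists c, Rn n c /\ forall k, ~ F k c.
Proof.
  intros hF.
  destruct (dependent_choice (fun _ (cr : (nat -> R) * R) => Rn n (fst cr) /\ snd cr > 0)
     (fun k cr cr' => snd cr' <= snd cr / 2 /\ (forall i, Rabs (fst cr' i - fst cr i) <= snd cr) /\
        forall z, F k z -> INR n * (2 * snd cr') ^ 2 < dist2 n (fst cr') z)
     ((fun _ => 0), 1)) as [s hs].
  - split; [intros i _; auto|simpl; lra].
  - intros k [c r] [hc hr]. destruct (baire_step n (F k) c r (hF k) hc hr) as [c' [r' [h1 [h2 [h3 h4]]]]].
    exists (c', r'). simpl. repeat split; auto; lra.
  - destruct (nested_limit n (fun k => fst (s k)) (fun k => snd (s k)))
      as [c [hc hlim]]; [intros k; apply hs|intros k; apply hs|intros k i; apply hs|].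
    exists c. split; auto. intros k hk.
    destruct (hs k) as [_ [_ [_ hfar]]]. specialize (hfar c hk).
    assert (dist2 n (fst (s (S k))) c <= INR n * (2 * snd (s (S k))) ^ 2).
    { apply dist2_bound. intros i _. rewrite Rabs_minus_sym. apply hlim. }
    lra.
Qed.

Lemma Rn_not_meager n : ~ meager_set n (Rn n).
Proof.
  intros [_ [F [hF hc]]]. destruct (baire n F hF) as [c [hc1 hc2]].
  destruct (hc c hc1) as [k hk]. eapply hc2; eauto.
Qed.

Lemma null_subset n A B : (forall x, A x -> B x) -> null_set n B -> null_set n A.
Proof.
  intros h [hB hn]. split; [auto|]. intros eps he.
  destruct (hn eps he) as [a [b [h1 [h2 h3]]]]. exists a, b. split; auto.
Qed.

(* Points are null in positive dimension: they are degenerate boxes. *)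
Lemma null_singleton n v : (1 <= n)%nat -> Rn n v -> null_set n (fun y => y = v).
Proof.
  intros hn hv. split; [intros x ->; auto|]. intros eps he.
  exists (fun _ => v), (fun _ => v). split; [|split].
  - intros; lra.
  - intros x ->. exists 0%nat. intros i _; lra.
  - intros N. rewrite sumR_zero; [lra|]. intros i _. unfold box_vol. apply prodR_zero; auto. ring.
Qed.

Definition lsum {A} (f : A -> R) (l : list A) : R := fold_right (fun x acc => f x + acc) 0 l.

Lemma lsum_app {A} f (l1 l2 : list A) : lsum f (l1 ++ l2) = lsum f l1 + lsum f l2.
Proof. induction l1; simpl; [lra|rewrite IHl1; lra]. Qed.

Lemma lsum_nonneg {A} (f : A -> R) l : (forall x, 0 <= f x) -> 0 <= lsum f l.
Proof. intros h; induction l; simpl; [lra|pose proof (h a); lra]. Qed.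

Lemma lsum_remove {A} (dec : forall x y : A, {x = y} + {x <> y}) (f : A -> R) a l :
  (forall x, 0 <= f x) -> (In a l -> f a + lsum f (remove dec a l) <= lsum f l) /\
  lsum f (remove dec a l) <= lsum f l.
Proof.
  intros h; induction l as [|x l [IH1 IH2]]; simpl; [split; [tauto|lra]|].
  pose proof (h x). destruct (dec a x) as [->|ne]; simpl; [split; intros; lra|].
  split; [intros [e|hin]; [congruence|pose proof (IH1 hin); lra]|lra].
Qed.

Lemma lsum_incl {A} (dec : forall x y : A, {x = y} + {x <> y}) (f : A -> R) l1 l2 :
  (forall x, 0 <= f x) -> NoDup l1 -> incl l1 l2 -> lsum f l1 <= lsum f l2.
Proof.
  intros h nd. revert l2. induction nd as [|a l1 na nd IH]; intros l2 hi; simpl.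
  - apply lsum_nonneg; auto.
  - assert (hl : incl l1 (remove dec a l2)).
    { intros y hy. apply in_in_remove; [intros ->; contradiction|apply hi; simpl; auto]. }
    pose proof (IH _ hl). pose proof (proj1 (lsum_remove dec f a l2 h) (hi a (or_introl eq_refl))). lra.
Qed.

Lemma sumR_lsum N g : sumR N g = lsum g (seq 0 N).
Proof.
  induction N; [reflexivity|]. rewrite seq_S, lsum_app.
  change (sumR (S N) g) with (sumR N g + g N). rewrite IHN. simpl. lra.
Qed.

Lemma lsum_map {A B} (f : B -> R) (g : A -> B) l : lsum f (map g l) = lsum (fun x => f (g x)) l.
Proof. induction l; simpl; auto. rewrite IHl; auto. Qed.

Lemma lsum_prod {A B} (v : A * B -> R) l1 l2 :
  lsum v (list_prod l1 l2) = lsum (fun k => lsum (fun j => v (k, j)) l2) l1.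
Proof. induction l1; simpl; auto. rewrite lsum_app, IHl1, lsum_map; auto. Qed.

Lemma cantor_double_sum (v : nat * nat -> R) (c : nat -> R) eps : (forall p, 0 <= v p) ->
  (forall k N, sumR N (fun j => v (k, j)) <= c k) -> (forall M, sumR M c <= eps) ->
  forall N, sumR N (fun m => v (Cantor.of_nat m)) <= eps.
Proof.
  intros hv hc hM N. rewrite sumR_lsum, <- (lsum_map v Cantor.of_nat).
  apply Rle_trans with (lsum v (list_prod (seq 0 N) (seq 0 N))).
  - apply lsum_incl; auto; [decide equality; apply Nat.eq_dec| |].
    + apply NoDup_map_NoDup_ForallPairs; [intros x y _ _; apply Cantor.of_nat_inj|apply seq_NoDup].
    + intros [k j] hin. apply in_map_iff in hin as [m [e hm]]. apply in_seq in hm.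
      pose proof (Cantor.to_nat_non_decreasing k j) as h. rewrite <- e, Cantor.cancel_to_of in h.
      apply in_prod; apply in_seq; lia.
  - rewrite lsum_prod. apply Rle_trans with (lsum c (seq 0 N)); [|rewrite <- sumR_lsum; auto].
    assert (rows : forall L, lsum (fun k => lsum (fun j => v (k, j)) (seq 0 N)) L <= lsum c L).
    { induction L as [|a L IH]; simpl; [lra|]. pose proof (hc a N) as h. rewrite sumR_lsum in h. lra. }
    apply rows.
Qed.

(* Countable unions of null sets are null: the [k]-th set is covered with total volume
   [eps / 2^(k+1)]. *)
Lemma null_countable_union n (F : nat -> pset) :
  (forall k, null_set n (F k)) -> null_set n (fun y => exists k, F k y).
Proof.
  intros H. split; [intros x [k hk]; apply (proj1 (H k)); auto|]. intros eps he.
  assert (hex : forall k, exists ab : (nat -> nat -> R) * (nat -> nat -> R),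
     (forall m i, fst ab m i <= snd ab m i) /\
     (forall x, F k x -> exists m, in_box n (fst ab m) (snd ab m) x) /\
     (forall N, sumR N (fun m => box_vol n (fst ab m) (snd ab m)) <= eps * (/2) ^ (S k))).
  { intros k. destruct (proj2 (H k) (eps * (/2) ^ (S k))) as [a [b hab]].
    - apply Rmult_lt_0_compat; auto. apply pow_lt; lra.
    - exists (a, b); auto. }
  set (ab := fun k => proj1_sig (constructive_indefinite_description _ (hex k))).
  assert (hab : forall k, (forall m i, fst (ab k) m i <= snd (ab k) m i) /\
     (forall x, F k x -> exists m, in_box n (fst (ab k) m) (snd (ab k) m) x) /\
     (forall N, sumR N (fun m => box_vol n (fst (ab k) m) (snd (ab k) m)) <= eps * (/2) ^ (S k)))
    by (intros k; exact (proj2_sig (constructive_indefinite_description _ (hex k)))).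
  exists (fun m => fst (ab (fst (Cantor.of_nat m))) (snd (Cantor.of_nat m))),
         (fun m => snd (ab (fst (Cantor.of_nat m))) (snd (Cantor.of_nat m))).
  split; [|split].
  - intros m i. apply hab.
  - intros x [k hk]. destruct (proj1 (proj2 (hab k)) x hk) as [j hj].
    exists (Cantor.to_nat (k, j)). rewrite Cantor.cancel_of_to; auto.
  - apply (cantor_double_sum (fun p => box_vol n (fst (ab (fst p)) (snd p)) (snd (ab (fst p)) (snd p)))
             (fun k => eps * (/2) ^ (S k))).
    + intros [k j]. apply prodR_nonneg. intros i _. pose proof (proj1 (hab k) j i). simpl. lra.
    + intros k N'. apply (hab k).
    + intros M. rewrite sumR_geometric. pose proof (pow_le (/2) M ltac:(lra)). nra.
Qed.

Lemma interval_preimage a b h r y : r <> 0 -> a <= r * y + h <= b ->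
  Rmin ((a - h) / r) ((b - h) / r) <= y <= Rmax ((a - h) / r) ((b - h) / r).
Proof.
  intros hr hy. replace y with ((r * y + h - h) / r) by (field; auto). unfold Rdiv.
  destruct (Rlt_or_le 0 r) as [p|q].
  - assert (0 < / r) by (apply Rinv_0_lt_compat; auto).
    assert ((a - h) * / r <= (r * y + h - h) * / r <= (b - h) * / r) by (split; apply Rmult_le_compat_r; lra).
    pose proof (Rmin_l ((a - h) * / r) ((b - h) * / r)). pose proof (Rmax_r ((a - h) * / r) ((b - h) * / r)). lra.
  - assert (/ r < 0) by (apply Rinv_lt_0_compat; lra).
    assert ((b - h) * / r <= (r * y + h - h) * / r <= (a - h) * / r) by (split; nra).
    pose proof (Rmin_r ((a - h) * / r) ((b - h) * / r)). pose proof (Rmax_l ((a - h) * / r) ((b - h) * / r)). lra.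
Qed.

Lemma Rmax_minus_Rmin u v : Rmax u v - Rmin u v = Rabs (u - v).
Proof. unfold Rmin, Rmax, Rabs; destruct (Rle_dec u v); destruct (Rcase_abs (u - v)); lra. Qed.

(* The preimage of a box under [y |-> r y + h] is a box with volume scaled by [|r|^-n]. *)
Lemma null_affine n B h r : r <> 0 -> null_set n B ->
  null_set n (fun y => Rn n y /\ B (fun i => r * y i + h i)).
Proof.
  intros hr [hB hn]. split; [tauto|]. intros eps he.
  assert (hra : 0 < Rabs r) by (apply Rabs_pos_lt; auto).
  assert (hrn : 0 < Rabs r ^ n) by (apply pow_lt; auto).
  destruct (hn (eps * Rabs r ^ n)) as [a [b [h1 [h2 h3]]]]; [apply Rmult_lt_0_compat; auto|].
  set (lo := fun k i => (a k i - h i) / r). set (hi := fun k i => (b k i - h i) / r).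
  exists (fun k i => Rmin (lo k i) (hi k i)), (fun k i => Rmax (lo k i) (hi k i)).
  split; [|split].
  - intros k i. eapply Rle_trans; [apply Rmin_l|apply Rmax_l].
  - intros y [hy hBy]. destruct (h2 _ hBy) as [k hk]. exists k. intros i hi'.
    apply interval_preimage; auto.
  - intros N. unfold box_vol.
    rewrite (sumR_ext N _ (fun k => (/ Rabs r) ^ n * box_vol n (a k) (b k))).
    + rewrite sumR_scal. apply Rle_trans with ((/ Rabs r) ^ n * (eps * Rabs r ^ n)).
      * apply Rmult_le_compat_l; auto. apply pow_le. left; apply Rinv_0_lt_compat; auto.
      * rewrite pow_inv. right. field. lra.
    + intros k _. unfold box_vol. rewrite <- prodR_scal. apply prodR_ext. intros i _.
      rewrite Rmax_minus_Rmin. unfold lo, hi.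
      replace ((a k i - h i) / r - (b k i - h i) / r) with ((b k i - a k i) * / (- r)) by (field; auto).
      rewrite Rabs_mult, Rabs_right by (pose proof (h1 k i); lra). rewrite Rabs_inv, Rabs_Ropp. ring.
Qed.

Definition overlap (lo hi c d : R) : R := Rmax 0 (Rmin hi d - Rmax lo c).

Lemma Rmax_cases a b : (Rmax a b = a /\ b <= a) \/ (Rmax a b = b /\ a <= b).
Proof. unfold Rmax; destruct (Rle_dec a b); [right|left]; split; auto; lra. Qed.
Lemma Rmin_cases a b : (Rmin a b = a /\ a <= b) \/ (Rmin a b = b /\ b <= a).
Proof. unfold Rmin; destruct (Rle_dec a b); [left|right]; split; auto; lra. Qed.

Ltac destruct_minmax := repeat match goal with
  | |- context [Rmax ?a ?b] => let h := fresh in destruct (Rmax_cases a b) as [[h ?]|[h ?]]; rewrite h in *; clear h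
  | |- context [Rmin ?a ?b] => let h := fresh in destruct (Rmin_cases a b) as [[h ?]|[h ?]]; rewrite h in *; clear h
  | _ : context [Rmax ?a ?b] |- _ => let h := fresh in destruct (Rmax_cases a b) as [[h ?]|[h ?]]; rewrite h in *; clear h
  | _ : context [Rmin ?a ?b] |- _ => let h := fresh in destruct (Rmin_cases a b) as [[h ?]|[h ?]]; rewrite h in *; clear h
  end.

Lemma overlap_nonneg lo hi c d : 0 <= overlap lo hi c d.
Proof. apply Rmax_l. Qed.

Lemma overlap_split lo hi c m d : c <= m <= d -> overlap lo hi c m + overlap lo hi m d = overlap lo hi c d.
Proof. intros h. unfold overlap. destruct_minmax; lra. Qed.

Lemma overlap_le lo hi c d : lo <= hi -> overlap lo hi c d <= hi - lo.
Proof. intros h. unfold overlap. destruct_minmax; lra. Qed.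

Lemma overlap_full lo hi c d : lo <= c -> c <= d -> d <= hi -> overlap lo hi c d = d - c.
Proof. intros h1 h2 h3. unfold overlap. destruct_minmax; lra. Qed.

Lemma prodR_upd_add m i u v g : (i < m)%nat ->
  prodR m (upd g i (u + v)) = prodR m (upd g i u) + prodR m (upd g i v).
Proof.
  induction m as [|m IH]; intros hi; [lia|]. simpl.
  destruct (Nat.eq_dec i m) as [->|ne].
  - assert (e : forall w, prodR m (upd g m w) = prodR m g).
    { intros w. apply prodR_ext. intros j hj. apply upd_other; lia. }
    rewrite !e, !upd_same. ring.
  - rewrite IH by lia. rewrite !upd_other by lia. ring.
Qed.

Lemma prodR_enlarge_linear m f : (forall i, 0 <= f i) ->
  exists C, 0 <= C /\ forall e, 0 <= e <= 1 -> prodR m (fun i => f i + 2 * e) <= prodR m f + e * C.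
Proof.
  intros hf. induction m as [|m [C [hC IH]]].
  - exists 0. split; [lra|]. intros; simpl; lra.
  - set (P := prodR m f). assert (hP : 0 <= P) by (apply prodR_nonneg; auto).
    exists (2 * P + C * (f m + 2)). pose proof (hf m). split; [nra|]. intros e he. simpl. fold P.
    specialize (IH e he). fold P in IH.
    assert (0 <= prodR m (fun i => f i + 2 * e)) by (apply prodR_nonneg; intros; pose proof (hf i); lra).
    assert (prodR m (fun i => f i + 2 * e) * (f m + 2 * e) <= (P + e * C) * (f m + 2 * e))
      by (apply Rmult_le_compat_r; lra).
    assert (0 <= e * C * (1 - e)) by (apply Rmult_le_pos; [apply Rmult_le_pos|]; lra).
    nra.
Qed.

Lemma prodR_enlarge m f d : (forall i, 0 <= f i) -> d > 0 ->
  exists e, e > 0 /\ prodR m (fun i => f i + 2 * e) <= prodR m f + d.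
Proof.
  intros hf hd. destruct (prodR_enlarge_linear m f hf) as [C [hC H]].
  set (e := Rmin 1 (d / (C + 1))).
  assert (he : 0 < e <= 1 /\ e <= d / (C + 1)).
  { unfold e. pose proof (Rmin_l 1 (d / (C + 1))). pose proof (Rmin_r 1 (d / (C + 1))).
    pose proof (Rmin_pos 1 (d / (C + 1)) ltac:(lra) ltac:(apply Rdiv_lt_0_compat; lra)). lra. }
  exists e. split; [lra|]. apply Rle_trans with (prodR m f + e * C); [apply H; lra|].
  assert (e * (C + 1) <= d).
  { apply Rle_trans with (d / (C + 1) * (C + 1)); [apply Rmult_le_compat_r; lra|right; field; lra]. }
  nra.
Qed.

Lemma box_vol_unit n : box_vol n (fun _ => 0) (fun _ => 1) = 1.
Proof. unfold box_vol. induction n; simpl; [auto|]. rewrite IHn. ring. Qed.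

Section Bisection.
Variable n : nat.
Variables A B : nat -> nat -> R.

Definition overlap_vol (k : nat) (c d : nat -> R) : R :=
  prodR n (fun i => overlap (A k i) (B k i) (c i) (d i)).

Definition sparse (c d : nat -> R) : Prop :=
  (forall i, c i <= d i) /\
  forall N, sumR N (fun k => overlap_vol k c d) <= / 2 * box_vol n c d.

Lemma overlap_vol_nonneg k c d : 0 <= overlap_vol k c d.
Proof. apply prodR_nonneg. intros; apply overlap_nonneg. Qed.

Lemma overlap_vol_split k c d i m : (i < n)%nat -> c i <= m <= d i ->
  overlap_vol k c d = overlap_vol k c (upd d i m) + overlap_vol k (upd c i m) d.
Proof.
  intros hi hm. set (g := fun j => overlap (A k j) (B k j) (c j) (d j)).
  set (ov := overlap (A k i) (B k i)).
  assert (e1 : overlap_vol k c d = prodR n (upd g i (ov (c i) m + ov m (d i)))).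
  { apply prodR_ext. intros j _. destruct (Nat.eq_dec j i) as [->|ne];
      [rewrite upd_same; symmetry; apply overlap_split; auto|rewrite upd_other; auto]. }
  assert (e2 : overlap_vol k c (upd d i m) = prodR n (upd g i (ov (c i) m))).
  { apply prodR_ext. intros j _. destruct (Nat.eq_dec j i) as [->|ne];
      rewrite ?upd_same, ?upd_other; auto. }
  assert (e3 : overlap_vol k (upd c i m) d = prodR n (upd g i (ov m (d i)))).
  { apply prodR_ext. intros j _. destruct (Nat.eq_dec j i) as [->|ne];
      rewrite ?upd_same, ?upd_other; auto. }
  rewrite e1, e2, e3. apply prodR_upd_add; auto.
Qed.

Lemma box_vol_halves c d i : (i < n)%nat ->
  box_vol n c (upd d i ((c i + d i) / 2)) = / 2 * box_vol n c d /\
  box_vol n (upd c i ((c i + d i) / 2)) d = / 2 * box_vol n c d.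
Proof.
  intros hi. set (m := (c i + d i) / 2). set (g := fun j => d j - c j).
  assert (e1 : box_vol n c d = prodR n (upd g i ((m - c i) + (d i - m)))).
  { apply prodR_ext. intros j _. destruct (Nat.eq_dec j i) as [->|ne];
      [rewrite upd_same; ring|rewrite upd_other; auto]. }
  assert (e2 : box_vol n c (upd d i m) = prodR n (upd g i (m - c i))).
  { apply prodR_ext. intros j _. destruct (Nat.eq_dec j i) as [->|ne];
      rewrite ?upd_same, ?upd_other; auto. }
  assert (e3 : box_vol n (upd c i m) d = prodR n (upd g i (d i - m))).
  { apply prodR_ext. intros j _. destruct (Nat.eq_dec j i) as [->|ne];
      rewrite ?upd_same, ?upd_other; auto. }
  assert (e4 : d i - m = m - c i) by (unfold m; field).
  rewrite prodR_upd_add in e1 by auto. rewrite e4 in e1, e3. split; lra.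
Qed.

Definition halved_at (i : nat) (c d c' d' : nat -> R) : Prop :=
  (forall j, c j <= c' j /\ d' j <= d j) /\ d' i - c' i = (d i - c i) / 2 /\
  (forall j, j <> i -> c' j = c j /\ d' j = d j).

Lemma halves_halved_at c d i : c i <= d i ->
  halved_at i c d c (upd d i ((c i + d i) / 2)) /\ halved_at i c d (upd c i ((c i + d i) / 2)) d.
Proof.
  intros h. split; (split; [|split]);
    [intros j; destruct (Nat.eq_dec j i) as [->|ne]; rewrite ?upd_same, ?upd_other by auto; lra
    |rewrite upd_same; field
    |intros j ne; rewrite upd_other by auto; auto
    |intros j; destruct (Nat.eq_dec j i) as [->|ne]; rewrite ?upd_same, ?upd_other by auto; lra
    |rewrite upd_same; field
    |intros j ne; rewrite upd_other by auto; auto].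
Qed.

(* One of the two halves of a sparse box along a side is sparse: otherwise their overlap sums
   would exceed half of their volumes, whose sum is the volume of [c, d]. *)
Lemma sparse_bisect c d i : (i < n)%nat -> sparse c d ->
  exists c' d', sparse c' d' /\ halved_at i c d c' d'.
Proof.
  intros hi [hcd hsum]. set (m := (c i + d i) / 2).
  destruct (halves_halved_at c d i (hcd i)) as [H1 H2]. fold m in H1, H2.
  destruct (box_vol_halves c d i hi) as [v1 v2]. fold m in v1, v2.
  apply NNPP. intros no.
  assert (no1 : exists N1, / 2 * box_vol n c (upd d i m) < sumR N1 (fun k => overlap_vol k c (upd d i m))).
  { apply NNPP. intros h. apply no. exists c, (upd d i m). split; [split|exact H1].
    - intros j. destruct (proj1 H1 j). pose proof (hcd j). destruct (Nat.eq_dec j i) as [->|ne];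
        [rewrite upd_same; unfold m; lra|rewrite upd_other by auto; lra].
    - intros N. apply Rnot_lt_le. intros hN. apply h. exists N. exact hN. }
  assert (no2 : exists N2, / 2 * box_vol n (upd c i m) d < sumR N2 (fun k => overlap_vol k (upd c i m) d)).
  { apply NNPP. intros h. apply no. exists (upd c i m), d. split; [split|exact H2].
    - intros j. destruct (proj1 H2 j). pose proof (hcd j). destruct (Nat.eq_dec j i) as [->|ne];
        [rewrite upd_same; unfold m; lra|rewrite upd_other by auto; lra].
    - intros N. apply Rnot_lt_le. intros hN. apply h. exists N. exact hN. }
  destruct no1 as [N1 h1]. destruct no2 as [N2 h2]. set (N := max N1 N2).
  assert (s1 : sumR N1 (fun k => overlap_vol k c (upd d i m)) <= sumR N (fun k => overlap_vol k c (upd d i m)))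
    by (apply sumR_mono; [intros; apply overlap_vol_nonneg|lia]).
  assert (s2 : sumR N2 (fun k => overlap_vol k (upd c i m) d) <= sumR N (fun k => overlap_vol k (upd c i m) d))
    by (apply sumR_mono; [intros; apply overlap_vol_nonneg|lia]).
  assert (s3 : sumR N (fun k => overlap_vol k c d) =
               sumR N (fun k => overlap_vol k c (upd d i m)) + sumR N (fun k => overlap_vol k (upd c i m) d)).
  { rewrite <- sumR_plus. apply sumR_ext. intros k _. apply overlap_vol_split; auto.
    pose proof (hcd i). unfold m; lra. }
  pose proof (hsum N). lra.
Qed.

Lemma sparse_halve c d m : (m <= n)%nat -> sparse c d ->
  exists c' d', sparse c' d' /\ forall i, (c i <= c' i /\ d' i <= d i) /\
    ((i < m)%nat -> d' i - c' i = (d i - c i) / 2) /\ ((m <= i)%nat -> c' i = c i /\ d' i = d i).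
Proof.
  intros hm hs. induction m as [|m IH].
  - exists c, d. split; auto. intros i. split; [lra|split; [lia|auto]].
  - destruct (IH ltac:(lia)) as [c1 [d1 [hs1 h1]]].
    destruct (sparse_bisect c1 d1 m ltac:(lia) hs1) as [c' [d' [hs' [hle [hmid hsame]]]]].
    exists c', d'. split; [exact hs'|]. intros i.
    destruct (h1 i) as [[l1 l2] [l3 l4]]. destruct (hle i) as [l5 l6].
    split; [lra|split].
    + intros hi. destruct (Nat.eq_dec i m) as [->|ne].
      * rewrite hmid. destruct (l4 (le_n m)) as [-> ->]. auto.
      * destruct (hsame i ne) as [-> ->]. apply l3. lia.
    + intros hi. destruct (hsame i ltac:(lia)) as [-> ->]. apply l4. lia.
Qed.

Lemma sparse_not_inside c d k : sparse c d -> (forall i, (i < n)%nat -> c i < d i) ->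
  (forall i, (i < n)%nat -> A k i <= c i /\ d i <= B k i) -> False.
Proof.
  intros [hle hsum] hpos hin.
  assert (hfull : overlap_vol k c d = box_vol n c d).
  { apply prodR_ext. intros i hi. destruct (hin i hi). apply overlap_full; auto. }
  assert (0 < box_vol n c d) by (apply prodR_pos; intros i hi; pose proof (hpos i hi); lra).
  pose proof (hsum (S k)) as h. simpl in h.
  pose proof (sumR_nonneg k (fun k => overlap_vol k c d) ltac:(intros; apply overlap_vol_nonneg)). lra.
Qed.

Lemma sparse_cubes_shrink : sparse (fun _ => 0) (fun _ => 1) ->
  exists x, Rn n x /\ forall j, exists c d, sparse c d /\
    forall i, (i < n)%nat -> d i - c i = (/2) ^ j /\ Rabs (x i - c i) <= 2 * (/2) ^ j.
Proof.
  intros hs0.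
  destruct (dependent_choice
     (fun k (cd : (nat -> R) * (nat -> R)) => sparse (fst cd) (snd cd) /\ Rn n (fst cd) /\
        forall i, (i < n)%nat -> snd cd i - fst cd i = (/2) ^ k)
     (fun _ cd cd' => forall i, fst cd i <= fst cd' i /\ snd cd' i <= snd cd i)
     ((fun _ => 0), (fun _ => 1))) as [s hs].
  - split; [exact hs0|split; [intros i _; auto|intros; simpl; lra]].
  - intros k [c d] [hcd [hc hside]]. simpl in *.
    destruct (sparse_halve c d n (le_n n) hcd) as [c' [d' [hs' h']]].
    exists (c', d'). simpl. split; [split; [exact hs'|split]|intros i; apply h'].
    + intros i hi. destruct (h' i) as [_ [_ e]]. rewrite (proj1 (e hi)). auto.
    + intros i hi. rewrite (proj1 (proj2 (h' i)) hi), hside by auto. simpl. field.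
  - destruct (nested_limit n (fun k => fst (s k)) (fun k => (/2) ^ k)) as [x [hx hlim]].
    + intros k. apply hs.
    + intros k. simpl. lra.
    + intros k i. destruct (hs k) as [[[hle _] [hc hside]] hstep].
      destruct (hstep i) as [l1 l2]. destruct (le_lt_dec n i) as [hi|hi].
      * destruct (hs (S k)) as [[_ [hc' _]] _]. rewrite hc, hc' by auto. rewrite Rminus_0_r, Rabs_R0.
        apply pow_le; lra.
      * pose proof (hside i hi). pose proof (hle i). pose proof (proj1 (proj1 (proj1 (hs (S k)))) i).
        rewrite Rabs_right; lra.
    + exists x. split; [exact hx|]. intros j. exists (fst (s j)), (snd (s j)).
      split; [apply hs|]. intros i hi. split; [apply hs; auto|apply hlim].
Qed.

(* If every point of R^n lies deep inside some box of the family, the unit cube is not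
   sparse: the small sparse cubes near the limit point would lie inside one box. *)
Lemma deep_cover_not_sparse :
  (forall x, Rn n x -> exists k delta, delta > 0 /\ forall i, (i < n)%nat -> A k i + delta <= x i <= B k i - delta) ->
  ~ sparse (fun _ => 0) (fun _ => 1).
Proof.
  intros hcover hs0. destruct (sparse_cubes_shrink hs0) as [x [hx hnear]].
  destruct (hcover x hx) as [k [delta [hdelta hin]]].
  destruct (pow_lt_1_zero (/2) ltac:(rewrite Rabs_right; lra) (delta / 3) ltac:(lra)) as [j hj].
  specialize (hj j (le_n j)). rewrite Rabs_right in hj by (apply Rle_ge, pow_le; lra).
  destruct (hnear j) as [c [d [hs hcd]]].
  apply (sparse_not_inside c d k hs).
  - intros i hi. destruct (hcd i hi) as [hside _]. pose proof (pow_lt (/2) j ltac:(lra)). lra.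
  - intros i hi. destruct (hcd i hi) as [hside hl]. pose proof (hin i hi).
    pose proof (Rle_abs (x i - c i)). pose proof (Rabs_Ropp (x i - c i)). pose proof (Rle_abs (- (x i - c i))).
    lra.
Qed.

End Bisection.

(* R^n is not Lebesgue null: enlarging the boxes of a cover of total volume 1/4 by margins
   [eta k] keeps the total volume below 1/2, so the unit cube is sparse for the enlarged
   family, yet every point lies at depth [eta k] inside some enlarged box. *)
Theorem Rn_not_null n : ~ null_set n (Rn n).
Proof.
  intros [_ hnull].
  destruct (hnull (/4)) as [a [b [hab [hcov hsum]]]]; [lra|].
  assert (hex : forall k, exists e, e > 0 /\
     prodR n (fun i => (b k i - a k i) + 2 * e) <= box_vol n (a k) (b k) + /4 * (/2) ^ (S k)).
  { intros k. apply prodR_enlarge. intros i; pose proof (hab k i); lra.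
    apply Rmult_lt_0_compat; [lra|apply pow_lt; lra]. }
  set (eta := fun k => proj1_sig (constructive_indefinite_description _ (hex k))).
  assert (heta : forall k, eta k > 0 /\
     prodR n (fun i => (b k i - a k i) + 2 * eta k) <= box_vol n (a k) (b k) + /4 * (/2) ^ (S k))
    by (intros k; exact (proj2_sig (constructive_indefinite_description _ (hex k)))).
  apply (deep_cover_not_sparse n (fun k i => a k i - eta k) (fun k i => b k i + eta k)).
  - intros x hx. destruct (hcov x hx) as [k hk]. exists k, (eta k). split; [apply heta|].
    intros i hi. specialize (hk i hi). lra.
  - split; [intros; lra|]. intros N. rewrite box_vol_unit.
    apply Rle_trans with (sumR N (fun k => box_vol n (a k) (b k) + /4 * (/2) ^ (S k))).
    + apply sumR_le. intros k _.
      apply Rle_trans with (prodR n (fun i => (b k i - a k i) + 2 * eta k)); [|apply heta].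
      apply prodR_mono. intros i _. split; [apply overlap_nonneg|].
      pose proof (hab k i). pose proof (proj1 (heta k)).
      eapply Rle_trans; [apply overlap_le; lra|lra].
    + rewrite sumR_plus, sumR_geometric. specialize (hsum N).
      pose proof (pow_le (/2) N ltac:(lra)). lra.
Qed.

(* The properties of the null and meager ideals that the construction uses: a proper
   sigma-ideal containing the points and invariant under nonzero affine maps. *)
Record admissible_ideal (Id : pset -> Prop) (n : nat) : Prop := {
  ideal_subset : forall A B : pset, (forall x, A x -> B x) -> Id B -> Id A;
  ideal_singleton : forall v, Rn n v -> Id (fun y => y = v);
  ideal_countable_union : forall F : nat -> pset, (forall k, Id (F k)) -> Id (fun y => exists k, F k y);
  ideal_affine : forall B h r, r <> 0 -> Id B -> Id (fun y => Rn n y /\ B (fun i => r * y i + h i));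
  ideal_proper : ~ Id (Rn n) }.

Lemma admissible_null n : (1 <= n)%nat -> admissible_ideal (in_ideal NullIdeal n) n.
Proof.
  intros hn. split; simpl.
  - apply null_subset.
  - intros v hv. apply null_singleton; auto.
  - apply null_countable_union.
  - intros B h r hr hB. apply null_affine; auto.
  - apply Rn_not_null.
Qed.

Lemma admissible_meager n : (1 <= n)%nat -> admissible_ideal (in_ideal MeagerIdeal n) n.
Proof.
  intros hn. split; simpl.
  - apply meager_subset.
  - intros v hv. apply meager_singleton; auto.
  - apply meager_countable_union.
  - intros B h r hr hB. apply meager_affine; auto.
  - apply Rn_not_meager.
Qed.

Lemma zorn (T : Type) (P : (T -> Prop) -> Prop) :
  (forall F : (T -> Prop) -> Prop, (forall A, F A -> P A) ->
     (forall A B, F A -> F B -> (forall t, A t -> B t) \/ (forall t, B t -> A t)) ->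
     P (fun t => exists A, F A /\ A t)) ->
  exists A, P A /\ forall B, (forall t, A t -> B t) -> P B -> forall t, B t -> A t.
Proof.
  intros H. destruct (@classical_sets.Zorn_bigcup T P) as [A [PA Amax]].
  - intros F FP Ftot.
    replace (classical_sets.bigcup F (fun X => X)) with (fun t => exists A, F A /\ A t).
    + apply H; [exact FP|]. intros A B FA FB. exact (Ftot A B FA FB).
    + apply functional_extensionality; intros t. apply propositional_extensionality.
      split; [intros [X [FX Xt]]; exists X; auto|intros [X FX Xt]; exists X; auto].
  - exists A. split; auto. intros B AB PB t Bt. apply NNPP; intros nAt.
    apply (Amax B); auto. split; [exact AB|]. intros BA. apply nAt, BA, Bt.
Qed.

Module WellOrdering.
Import ssrbool eqtype boolp.

Lemma well_ordering_exists (K : Type) : exists R : K -> K -> Prop, forall P : K -> Prop,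
  (exists x, P x) -> exists z, P z /\ (forall x, P x -> R z x) /\
  forall z', P z' -> (forall x, P x -> R z' x) -> z' = z.
Proof.
  destruct (@wochoice.well_ordering_principle {classic K}) as [R wo].
  assert (mem_pred : forall (Q : K -> Prop) y,
    ssrbool.in_mem y (ssrbool.mem (fun x0 : {classic K} => asbool (Q x0))) = Q y :> Prop).
  { intros Q y. exact (asboolE (Q y)). }
  exists (fun x y => R x y = true). intros P [x Px].
  destruct (wo (fun x => asbool (P x))) as [z [[Pz lb] uniq]].
  - exists x. rewrite mem_pred. exact Px.
  - exists z. rewrite mem_pred in Pz. split; [exact Pz|split].
    + intros y Py. apply lb. rewrite mem_pred. exact Py.
    + intros z' Pz' lb'. symmetry. apply uniq. split.
      * rewrite mem_pred. exact Pz'.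
      * intros y Py. rewrite mem_pred in Py. apply lb', Py.
Qed.
End WellOrdering.

Lemma le_card_refl X : le_card X X.
Proof. exists (fun x => x); auto. Qed.

Lemma le_card_trans X Y Z : le_card X Y -> le_card Y Z -> le_card X Z.
Proof. intros [f Hf] [g Hg]. exists (fun x => g (f x)); auto. Qed.

Lemma sig_eq {A} (P : A -> Prop) (u v : {x | P x}) : proj1_sig u = proj1_sig v -> u = v.
Proof. destruct u, v; simpl; intros; subst; f_equal; apply proof_irrelevance. Qed.

Lemma le_card_sig_fun X (P Q : X -> Prop) : le_card {a | P a} {a | Q a} ->
  exists g : X -> X, (forall a, P a -> Q (g a)) /\ (forall a b, P a -> P b -> g a = g b -> a = b).
Proof.
  intros [f Hf].
  exists (fun a => match excluded_middle_informative (P a) with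
                   | left h => proj1_sig (f (exist _ a h)) | right _ => a end).
  split.
  - intros a ha. destruct (excluded_middle_informative (P a)); [apply proj2_sig|contradiction].
  - intros a b ha hb. destruct (excluded_middle_informative (P a)) as [ha'|]; [|contradiction].
    destruct (excluded_middle_informative (P b)) as [hb'|]; [|contradiction].
    intros E. apply sig_eq in E. apply Hf in E. apply (f_equal (@proj1_sig _ _)) in E. exact E.
Qed.

Lemma le_card_nat_sub X (P Q : X -> Prop) : (forall a, P a -> Q a) ->
  le_card nat {a | P a} -> le_card nat {a | Q a}.
Proof.
  intros h [f hf]. exists (fun i => exist Q (proj1_sig (f i)) (h _ (proj2_sig (f i)))).
  intros u v E. apply hf, sig_eq. apply (f_equal (@proj1_sig _ _)) in E. exact E.
Qed.

(* Cardinals are comparable: a maximal partial injection (by Zorn's lemma) is total on one side. *)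
Theorem le_card_total X Y : le_card X Y \/ le_card Y X.
Proof.
  destruct (zorn (X * Y) (fun R => (forall x y y', R (x, y) -> R (x, y') -> y = y') /\
                                   (forall x x' y, R (x, y) -> R (x', y) -> x = x')))
    as [A [[Af Ai] Amax]].
  - intros F FP Fch. split.
    + intros x y y' [B [FB By]] [C [FC Cy]].
      destruct (Fch B C FB FC) as [h|h]; [apply (proj1 (FP C FC) x)|apply (proj1 (FP B FB) x)]; auto.
    + intros x x' y [B [FB By]] [C [FC Cy]].
      destruct (Fch B C FB FC) as [h|h]; [apply (proj2 (FP C FC) x x' y)|apply (proj2 (FP B FB) x x' y)]; auto.
  - destruct (classic (forall x, exists y, A (x, y))) as [Hx|Hx].
    { left. exists (fun x => proj1_sig (constructive_indefinite_description _ (Hx x))).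
      intros u v E. apply (Ai u v (proj1_sig (constructive_indefinite_description _ (Hx u)))).
      - exact (proj2_sig (constructive_indefinite_description _ (Hx u))).
      - rewrite E. exact (proj2_sig (constructive_indefinite_description _ (Hx v))). }
    destruct (classic (forall y, exists x, A (x, y))) as [Hy|Hy].
    { right. exists (fun y => proj1_sig (constructive_indefinite_description _ (Hy y))).
      intros u v E. apply (Af (proj1_sig (constructive_indefinite_description _ (Hy u))) u v).
      - exact (proj2_sig (constructive_indefinite_description _ (Hy u))).
      - rewrite E. exact (proj2_sig (constructive_indefinite_description _ (Hy v))). }
    exfalso.
    apply not_all_ex_not in Hx as [x0 Hx0]. apply not_all_ex_not in Hy as [y0 Hy0].
    apply Hx0. exists y0.
    apply (Amax (fun p => A p \/ p = (x0, y0))); auto. split.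
    + intros x y y' [h1|h1] [h2|h2]; eauto;
        [inversion h2|inversion h1|inversion h1; inversion h2]; subst; auto; exfalso; eauto.
    + intros x x' y [h1|h1] [h2|h2]; eauto;
        [inversion h2|inversion h1|inversion h1; inversion h2]; subst; auto; exfalso; eauto.
Qed.

(* Hessenberg's theorem |X * X| = |X| for infinite X, by Zorn's lemma applied to partial
   pairing functions: graphs [R] of injections D * D -> D on a domain D that is empty or
   infinite.  A maximal one has a domain D that absorbs its complement. *)
Section Hessenberg.
Variable X : Type.

Definition dom (R : (X * X) * X -> Prop) (a : X) : Prop := exists c, R ((a, a), c).

Record pairing_graph (R : (X * X) * X -> Prop) : Prop := {
  pg_dom : forall a b c, R ((a, b), c) -> dom R a /\ dom R b /\ dom R c;
  pg_total : forall a b, dom R a -> dom R b -> exists c, R ((a, b), c);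
  pg_fun : forall p c c', R (p, c) -> R (p, c') -> c = c';
  pg_inj : forall p p' c, R (p, c) -> R (p', c) -> p = p';
  pg_size : (forall a, ~ dom R a) \/ le_card nat {a | dom R a} }.

Lemma dom_mono (R S : (X * X) * X -> Prop) : (forall t, R t -> S t) -> forall a, dom R a -> dom S a.
Proof. intros h a [c hc]; exists c; auto. Qed.

Lemma pairing_graph_chain (F : ((X * X) * X -> Prop) -> Prop) : (forall R, F R -> pairing_graph R) ->
  (forall R S, F R -> F S -> (forall t, R t -> S t) \/ (forall t, S t -> R t)) ->
  pairing_graph (fun t => exists R, F R /\ R t).
Proof.
  intros FP Fch.
  assert (sub : forall R, F R -> forall t, R t -> exists R, F R /\ R t) by eauto.
  assert (two : forall R S, F R -> F S -> exists T, F T /\ (forall t, R t -> T t) /\ (forall t, S t -> T t))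
    by (intros R S FR FS; destruct (Fch R S FR FS); [exists S|exists R]; auto).
  assert (dom_in : forall a, dom (fun t => exists R, F R /\ R t) a -> exists R, F R /\ dom R a)
    by (intros a [c [R [FR Rc]]]; exists R; split; [|exists c]; auto).
  split.
  - intros a b c [R [FR Rc]]. destruct (pg_dom R (FP R FR) a b c Rc) as [ha [hb hc]].
    repeat split; eapply dom_mono; eauto.
  - intros a b Da Db. apply dom_in in Da as [R [FR Da]]. apply dom_in in Db as [S [FS Db]].
    destruct (two R S FR FS) as [T [FT [hR hS]]].
    destruct (pg_total T (FP T FT) a b (dom_mono R T hR a Da) (dom_mono S T hS b Db)) as [c hc].
    exists c, T; auto.
  - intros p c c' [R [FR Rc]] [S [FS Sc]]. destruct (two R S FR FS) as [T [FT [hR hS]]].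
    apply (pg_fun T (FP T FT) p); auto.
  - intros p p' c [R [FR Rc]] [S [FS Sc]]. destruct (two R S FR FS) as [T [FT [hR hS]]].
    apply (pg_inj T (FP T FT) p p' c); auto.
  - destruct (classic (exists R, F R /\ le_card nat {a | dom R a})) as [[R [FR HR]]|H].
    + right. eapply le_card_nat_sub; [|exact HR]. apply dom_mono, sub, FR.
    + left. intros a Da. apply dom_in in Da as [R [FR Da]].
      destruct (pg_size R (FP R FR)) as [h|h]; [eapply h; eauto|apply H; eauto].
Qed.

Lemma pairing_graph_countable (e : nat -> X) : (forall i j, e i = e j -> i = j) ->
  exists R, pairing_graph R /\ dom R (e 0%nat).
Proof.
  intros He.
  set (R := fun t : (X * X) * X => exists i j, fst (fst t) = e i /\ snd (fst t) = e j /\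
                 snd t = e (Cantor.to_nat (i, j))).
  assert (hdom : forall a, dom R a <-> exists i, a = e i).
  { intros a; split; [intros [c [i [j [h1 _]]]]; exists i; auto|].
    intros [i ->]. exists (e (Cantor.to_nat (i, i))), i, i; auto. }
  exists R. split; [split|apply hdom; eauto].
  - intros a b c [i [j [h1 [h2 h3]]]]; cbn [fst snd] in *. repeat split; apply hdom; eauto.
  - intros a b Da Db. apply hdom in Da as [i ->]. apply hdom in Db as [j ->].
    exists (e (Cantor.to_nat (i, j))), i, j; auto.
  - intros [a b] c c' [i [j [h1 [h2 h3]]]] [i' [j' [h1' [h2' h3']]]]; cbn [fst snd] in *.
    subst. apply He in h1'. apply He in h2'. subst. auto.
  - intros [a b] [a' b'] c [i [j [h1 [h2 h3]]]] [i' [j' [h1' [h2' h3']]]]; cbn [fst snd] in *.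
    subst. apply He, Cantor.to_nat_inj in h3'. inversion h3'; subst; auto.
  - right. exists (fun i => exist (dom R) (e i) (proj2 (hdom (e i)) (ex_intro _ i eq_refl))).
    intros u v E. apply (f_equal (@proj1_sig _ _)) in E. auto.
Qed.

Section Graph.
Variable R : (X * X) * X -> Prop.
Hypothesis HR : pairing_graph R.
Variable F : X -> X -> X.
Hypothesis HF : forall a b, dom R a -> dom R b -> R ((a, b), F a b).

Lemma F_dom a b : dom R a -> dom R b -> dom R (F a b).
Proof. intros ha hb. exact (proj2 (proj2 (pg_dom R HR _ _ _ (HF a b ha hb)))). Qed.

Lemma F_inj a b a' b' : dom R a -> dom R b -> dom R a' -> dom R b' -> F a b = F a' b' -> a = a' /\ b = b'.
Proof.
  intros ha hb ha' hb' E. pose proof (HF a b ha hb) as r1. rewrite E in r1.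
  pose proof (pg_inj R HR _ _ _ r1 (HF a' b' ha' hb')) as h. inversion h; auto.
Qed.

(* Two distinct points of the domain tag two disjoint copies of it: the domain together with
   an injective image of another set [S] outside it still injects into the domain. *)
Lemma two_copies_into_dom (S : X -> Prop) (h : X -> X) d1 d2 :
  dom R d1 -> dom R d2 -> d1 <> d2 ->
  (forall a, S a -> ~ dom R a -> dom R (h a)) ->
  (forall a b, S a -> S b -> ~ dom R a -> ~ dom R b -> h a = h b -> a = b) ->
  let c := fun a => if excluded_middle_informative (dom R a) then F a d1 else F (h a) d2 in
  (forall a, S a -> dom R (c a)) /\ (forall a b, S a -> S b -> c a = c b -> a = b).
Proof.
  intros D1 D2 d12 hdom hinj c. split.
  - intros a Sa. unfold c. destruct (excluded_middle_informative (dom R a)); apply F_dom; auto.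
  - intros a b Sa Sb. unfold c.
    destruct (excluded_middle_informative (dom R a)) as [ha|ha];
    destruct (excluded_middle_informative (dom R b)) as [hb|hb]; intros E;
    apply F_inj in E; auto; destruct E as [E1 E2]; auto; try congruence.
Qed.
End Graph.

Lemma pairing_fun_exists R : pairing_graph R -> inhabited X ->
  exists F : X -> X -> X, forall a b, dom R a -> dom R b -> R ((a, b), F a b).
Proof.
  intros HR inh. exists (fun a b => epsilon inh (fun c => R ((a, b), c))).
  intros a b ha hb. apply epsilon_spec, (pg_total R HR); auto.
Qed.

Lemma two_points (P : X -> Prop) : le_card nat {a | P a} -> exists d1 d2, P d1 /\ P d2 /\ d1 <> d2.
Proof.
  intros [io Hio]. exists (proj1_sig (io 0%nat)), (proj1_sig (io 1%nat)).
  split; [apply proj2_sig|split; [apply proj2_sig|]].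
  intros E. apply sig_eq, Hio in E. discriminate.
Qed.

Definition extend_graph (R : (X * X) * X -> Prop) (D' : X -> Prop) (k : X -> X -> X) t : Prop :=
  R t \/ (D' (fst (fst t)) /\ D' (snd (fst t)) /\ ~ (dom R (fst (fst t)) /\ dom R (snd (fst t))) /\
          snd t = k (fst (fst t)) (snd (fst t))).

Lemma extend_graph_spec R D' k : pairing_graph R -> le_card nat {a | dom R a} ->
  (forall a, dom R a -> D' a) ->
  (forall a b, D' a -> D' b -> D' (k a b) /\ ~ dom R (k a b)) ->
  (forall a b a' b', D' a -> D' b -> D' a' -> D' b' -> k a b = k a' b' -> a = a' /\ b = b') ->
  pairing_graph (extend_graph R D' k) /\ forall a, dom (extend_graph R D' k) a <-> D' a.
Proof.
  intros HR Hinf HD' Hk Hkinj.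
  assert (Hdom : forall a, dom (extend_graph R D' k) a <-> D' a).
  { intros a; split.
    - intros [c [h|h]]; [apply HD'; exists c; exact h|apply h].
    - intros Da. destruct (classic (dom R a)) as [[c h]|h].
      + exists c. left. exact h.
      + exists (k a a). right. simpl. tauto. }
  split; [split|exact Hdom].
  - intros a b c [h|h]; simpl in h; rewrite !Hdom.
    + destruct (pg_dom R HR _ _ _ h) as [x1 [x2 x3]]. auto.
    + destruct h as [ha [hb [_ ->]]]. repeat split; auto. apply Hk; auto.
  - intros a b Da Db. apply Hdom in Da. apply Hdom in Db.
    destruct (classic (dom R a /\ dom R b)) as [[ha hb]|h].
    + destruct (pg_total R HR a b ha hb) as [c hc]. exists c. left. exact hc.
    + exists (k a b). right. simpl. tauto.
  - intros [a b] c c' [h|h] [h'|h']; simpl in *.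
    + apply (pg_fun R HR _ _ _ h h').
    + destruct (pg_dom R HR _ _ _ h). tauto.
    + destruct (pg_dom R HR _ _ _ h'). tauto.
    + destruct h as [_ [_ [_ ->]]]. destruct h' as [_ [_ [_ ->]]]. auto.
  - intros [a b] [a' b'] c [h|h] [h'|h']; simpl in *.
    + apply (pg_inj R HR _ _ _ h h').
    + destruct h' as [ha [hb [_ ->]]]. exfalso. apply (proj2 (Hk a' b' ha hb)).
      apply (pg_dom R HR _ _ _ h).
    + destruct h as [ha [hb [_ ->]]]. exfalso. apply (proj2 (Hk a b ha hb)).
      apply (pg_dom R HR _ _ _ h').
    + destruct h as [ha [hb [_ ->]]]. destruct h' as [ha' [hb' [_ E]]].
      apply Hkinj in E; auto. destruct E; subst; auto.
  - right. eapply le_card_nat_sub; [|exact Hinf]. intros a ha. apply Hdom, HD', ha.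
Qed.

Lemma pairing_graph_extend R : pairing_graph R -> le_card nat {a | dom R a} ->
  le_card {a | dom R a} {a | ~ dom R a} ->
  exists R', pairing_graph R' /\ (forall t, R t -> R' t) /\ exists a, dom R' a /\ ~ dom R a.
Proof.
  intros HR Hinf Hle.
  destruct (two_points (dom R) Hinf) as [d1 [d2 [D1 [D2 d12]]]].
  destruct (pairing_fun_exists R HR (inhabits d1)) as [F HF].
  pose proof (F_dom R HR F HF) as Fdom. pose proof (F_inj R HR F HF) as Finj.
  destruct (le_card_sig_fun X _ _ Hle) as [G [GnD Ginj]].
  set (D' := fun a => dom R a \/ exists d, dom R d /\ a = G d).
  set (Ginv := fun a => epsilon (inhabits d1) (fun d => dom R d /\ a = G d)).
  assert (GinvS : forall a, D' a -> ~ dom R a -> dom R (Ginv a) /\ a = G (Ginv a)).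
  { intros a [h|h] na; [contradiction|]. apply epsilon_spec, h. }
  destruct (two_copies_into_dom R HR F HF D' Ginv d1 d2 D1 D2 d12) as [cD cinj].
  - intros a Da na. apply GinvS; auto.
  - intros a b Da Db na nb E. rewrite (proj2 (GinvS a Da na)), (proj2 (GinvS b Db nb)), E. auto.
  - set (c := fun a => if excluded_middle_informative (dom R a) then F a d1 else F (Ginv a) d2) in *.
    set (k := fun a b => G (F (c a) (c b))).
    destruct (extend_graph_spec R D' k HR Hinf) as [HR' Hdom'].
    + intros a ha. left. exact ha.
    + intros a b Da Db. unfold k. split.
      * right. exists (F (c a) (c b)). split; [apply Fdom; auto; apply cD; auto|reflexivity].
      * apply GnD, F_dom; auto; apply cD; auto.
    + intros a b a' b' Da Db Da' Db' E. unfold k in E.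
      apply Ginj in E; try (apply Fdom; auto; apply cD; auto).
      apply Finj in E; try (apply cD; auto). destruct E as [E1 E2]. split; apply cinj; auto.
    + exists (extend_graph R D' k). split; [exact HR'|split].
      * intros t h. left. exact h.
      * exists (G d1). split; [apply Hdom'; right; exists d1; auto|apply GnD; exact D1].
Qed.

Lemma pairing_graph_absorb R : pairing_graph R -> le_card nat {a | dom R a} ->
  le_card {a | ~ dom R a} {a | dom R a} -> le_card (X * X) X.
Proof.
  intros HR Hinf Hle.
  destruct (two_points (dom R) Hinf) as [d1 [d2 [D1 [D2 d12]]]].
  destruct (pairing_fun_exists R HR (inhabits d1)) as [F HF].
  pose proof (F_dom R HR F HF) as Fdom. pose proof (F_inj R HR F HF) as Finj.
  destruct (le_card_sig_fun X _ _ Hle) as [g [gD ginj]].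
  destruct (two_copies_into_dom R HR F HF (fun _ => True) g d1 d2 D1 D2 d12) as [cD cinj]; auto.
  set (c := fun a => if excluded_middle_informative (dom R a) then F a d1 else F (g a) d2) in *.
  exists (fun p => F (c (fst p)) (c (snd p))).
  intros [x y] [x' y'] E; simpl in E. apply Finj in E; try (apply cD; auto). destruct E as [E1 E2].
  apply cinj in E1; auto. apply cinj in E2; auto. subst; auto.
Qed.

(* Hessenberg's theorem: |X * X| <= |X| for infinite [X].  A maximal pairing graph (Zorn)
   is nonempty, and by comparability its domain absorbs its complement. *)
Theorem hessenberg : le_card nat X -> le_card (X * X) X.
Proof.
  intros [e He].
  destruct (zorn _ pairing_graph pairing_graph_chain) as [R [HR Rmax]].
  destruct (pg_size R HR) as [Dempty|Dinf].
  - exfalso. destruct (pairing_graph_countable e He) as [R0 [HR0 [c hc]]].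
    assert (sub : forall t, R t -> R0 t).
    { intros [[a b] c'] h. exfalso. apply (Dempty a), (pg_dom R HR _ _ _ h). }
    apply (Dempty (e 0%nat)). exists c. apply (Rmax R0 sub HR0 _ hc).
  - destruct (le_card_total {a | ~ dom R a} {a | dom R a}) as [h|h].
    + apply (pairing_graph_absorb R HR Dinf h).
    + exfalso. destruct (pairing_graph_extend R HR Dinf h) as [R' [HR' [sub [a [[c ha] na]]]]].
      apply na. exists c. apply (Rmax R' sub HR' _ ha).
Qed.

End Hessenberg.

Lemma list_le_card X : le_card nat X -> le_card (list X) X.
Proof.
  intros HX. pose proof HX as [e He]. destruct (hessenberg X HX) as [p Hp].
  set (code := fix code (l : list X) := match l with nil => e 0%nat | a :: l' => p (a, code l') end).
  assert (code_inj : forall l l', length l = length l' -> code l = code l' -> l = l').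
  { induction l as [|a l IH]; intros [|a' l'] hl E; simpl in *; try discriminate; auto.
    apply Hp in E. inversion E; subst. f_equal. apply IH; auto. }
  exists (fun l => p (e (length l), code l)).
  intros u v E. apply Hp in E. inversion E as [[E1 E2]]. apply He in E1. auto.
Qed.

Lemma countable_prod A B : le_card A nat -> le_card B nat -> le_card (A * B) nat.
Proof.
  intros [f Hf] [g Hg]. exists (fun p => Cantor.to_nat (f (fst p), g (snd p))).
  intros [a b] [a' b'] E. apply Cantor.to_nat_inj in E. inversion E. f_equal; auto.
Qed.

Lemma countable_list A : le_card A nat -> le_card (list A) nat.
Proof.
  intros [f Hf]. eapply le_card_trans; [|apply list_le_card, le_card_refl].
  exists (map f). induction u as [|a u IH]; intros [|b v] E; simpl in *; try discriminate; auto.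
  inversion E. f_equal; auto.
Qed.

Lemma countable_bool : le_card bool nat.
Proof. exists (fun b : bool => if b then 1%nat else 0%nat). intros [|] [|] E; auto; discriminate. Qed.

Lemma countable_Q : le_card Q nat.
Proof.
  set (zcode := fun z : Z => match z with Z0 => 0%nat | Zpos p => (2 * Pos.to_nat p)%nat
                                         | Zneg p => (2 * Pos.to_nat p + 1)%nat end).
  assert (zinj : forall u v, zcode u = zcode v -> u = v).
  { intros [|p|p] [|q|q]; simpl; intros E; try lia; f_equal; apply Pos2Nat.inj; lia. }
  exists (fun q => Cantor.to_nat (zcode (Qnum q), Pos.to_nat (Qden q))).
  intros [a b] [c d] E. apply Cantor.to_nat_inj in E. inversion E as [[E1 E2]].
  apply zinj in E1. apply Pos2Nat.inj in E2. subst; auto.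
Qed.

Record strict_well_order {K : Type} (lt : K -> K -> Prop) : Prop := {
  swo_wf : well_founded lt;
  swo_total : forall u v, lt u v \/ u = v \/ lt v u;
  swo_trans : forall u v w, lt u v -> lt v w -> lt u w }.

Lemma strict_well_order_exists (K : Type) : exists lt : K -> K -> Prop, strict_well_order lt.
Proof.
  destruct (WellOrdering.well_ordering_exists K) as [R M].
  assert (least2 : forall u v, exists z, (z = u \/ z = v) /\ R z u /\ R z v /\
            forall z', (z' = u \/ z' = v) -> R z' u -> R z' v -> z' = z).
  { intros u v. destruct (M (fun x => x = u \/ x = v) (ex_intro _ u (or_introl eq_refl)))
      as [z [Pz [lb U]]].
    exists z. repeat split; auto. intros z' Pz' h1 h2. apply U; auto. intros x [->| ->]; auto. }
  assert (refl : forall u, R u u) by (intros u; destruct (least2 u u) as [z [[->| ->] [h _]]]; auto).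
  assert (tot : forall u v, R u v \/ R v u)
    by (intros u v; destruct (least2 u v) as [z [[->| ->] [h1 [h2 _]]]]; auto).
  assert (anti : forall u v, R u v -> R v u -> u = v).
  { intros u v huv hvu. destruct (least2 u v) as [z [_ [_ [_ U]]]].
    rewrite (U u (or_introl eq_refl) (refl u) huv), (U v (or_intror eq_refl) hvu (refl v)); auto. }
  assert (trans : forall u v w, R u v -> R v w -> R u w).
  { intros u v w huv hvw.
    destruct (M (fun x => x = u \/ x = v \/ x = w) (ex_intro _ u (or_introl eq_refl)))
      as [z [Pz [h _]]].
    destruct Pz as [->|[->| ->]]; [apply h; auto| |].
    - rewrite (anti u v huv (h u (or_introl eq_refl))). exact hvw.
    - rewrite <- (anti v w hvw (h v (or_intror (or_introl eq_refl)))). exact huv. }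
  exists (fun u v => R u v /\ u <> v). split.
  - intros a. apply NNPP; intros na.
    destruct (M (fun x => ~ Acc (fun u v => R u v /\ u <> v) x) (ex_intro _ a na)) as [z [Pz [h _]]].
    apply Pz. constructor. intros y [hyz ne]. apply NNPP; intros ny.
    apply ne, anti; auto.
  - intros u v. destruct (classic (u = v)) as [->|ne]; [auto|].
    destruct (tot u v); [left|right; right]; split; auto.
  - intros u v w [h1 n1] [h2 n2]. split; [eauto|]. intros ->. apply n1, anti; auto.
Qed.

Lemma wf_minimal {A} (lt : A -> A -> Prop) (P : A -> Prop) : well_founded lt ->
  forall a, P a -> exists m, P m /\ forall y, lt y m -> ~ P y.
Proof.
  intros wf a. induction a as [a IH] using (well_founded_ind wf). intros Pa.
  destruct (classic (exists y, lt y a /\ P y)) as [[y [hy Py]]|no]; [exact (IH y hy Py)|].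
  exists a; split; auto. intros y hy Py; apply no; eauto.
Qed.

(* Every type has a well-order all of whose proper initial segments are strictly smaller
   than the whole type: pull back the order below the least point with a large segment. *)
Theorem initial_well_order (K : Type) :
  exists lt : K -> K -> Prop, strict_well_order lt /\ forall g, ~ le_card K {d | lt d g}.
Proof.
  destruct (strict_well_order_exists K) as [lt [wf tot tr]].
  destruct (classic (exists a, le_card K {d | lt d a})) as [[a Ha]|no].
  - destruct (wf_minimal lt (fun a => le_card K {d | lt d a}) wf a Ha) as [a0 [[g Hg] mn]].
    set (f := fun u => proj1_sig (g u)).
    assert (finj : forall u v, f u = f v -> u = v) by (intros u v E; apply Hg, sig_eq, E).
    exists (fun u v => lt (f u) (f v)). split; [split|].
    + apply wf_inverse_image; exact wf.
    + intros u v. destruct (tot (f u) (f v)) as [h|[h|h]]; auto.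
    + intros u v w h1 h2; eauto.
    + intros v [h Hh]. apply (mn (f v) (proj2_sig (g v))).
      exists (fun k => exist (fun d => lt d (f v)) (f (proj1_sig (h k))) (proj2_sig (h k))).
      intros u w E. apply (f_equal (@proj1_sig _ _)) in E. simpl in E.
      apply finj in E. apply Hh, sig_eq, E.
  - exists lt. split; [split; auto|]. intros g h; apply no; eauto.
Qed.

Section Construction.
Variable n : nat.
Variable I : ideal_kind.
Variable K : Type.
Hypothesis HI : admissible_ideal (in_ideal I n) n.
Hypothesis Hcov : cov_is I n K.

Lemma ideal_empty : in_ideal I n (fun _ => False).
Proof. apply (ideal_subset _ _ HI _ (fun y => y = (fun _ => 0))); [tauto|]. apply HI. intros i _; auto. Qed.

Lemma ideal_unique_index {C} (F : C -> pset) (P : C -> Prop) :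
  (forall c, in_ideal I n (F c)) -> (forall c c', P c -> P c' -> c = c') -> in_ideal I n (fun y => exists c, P c /\ F c y).
Proof.
  intros HF Hu. destruct (classic (exists c, P c)) as [[c Pc]|no].
  - apply (ideal_subset _ _ HI _ (F c)); [|auto]. intros y [c' [Pc' Fy]]. rewrite (Hu c c' Pc Pc'). exact Fy.
  - apply (ideal_subset _ _ HI _ (fun _ => False)); [|apply ideal_empty].
    intros y [c [Pc _]]; apply no; eauto.
Qed.

Lemma ideal_countable_family {C} (F : C -> pset) : le_card C nat -> (forall c, in_ideal I n (F c)) ->
  in_ideal I n (fun y => exists c, F c y).
Proof.
  intros [e He] HF.
  apply (ideal_subset _ _ HI _ (fun y => exists k, exists c, e c = k /\ F c y)).
  - intros y [c Fy]. exists (e c), c; auto.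
  - apply HI. intros k. apply ideal_unique_index; auto. intros c c' E1 E2. apply He; congruence.
Qed.

(* [T] is avoidable when no [T]-indexed family of ideal sets covers R^n, i.e. |T| < cov. *)
Definition avoidable (T : Type) : Prop :=
  forall F : T -> pset, (forall t, in_ideal I n (F t)) -> exists y, Rn n y /\ forall t, ~ F t y.

Lemma avoidable_of_lt T : ~ le_card K T -> avoidable T.
Proof.
  intros nle F HF. apply NNPP; intro no. apply nle, (proj2 Hcov T F HF).
  intros x Hx. apply NNPP; intro nx. apply no. exists x; split; auto. intros t Ft. apply nx; eauto.
Qed.

Lemma avoidable_le T' T : le_card T' T -> avoidable T -> avoidable T'.
Proof.
  intros [f Hf] HT F HF.
  destruct (HT (fun t y => exists t', f t' = t /\ F t' y)) as [y [Ry Hy]].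
  - intros t. apply ideal_unique_index; auto. intros c c' E1 E2. apply Hf; congruence.
  - exists y; split; auto. intros t' Ft'. apply (Hy (f t')). exists t'; auto.
Qed.

Lemma avoidable_prod_countable T C : avoidable T -> le_card C nat -> avoidable (T * C).
Proof.
  intros HT HC F HF.
  destruct (HT (fun t y => exists c, F (t, c) y)) as [y [Ry Hy]].
  - intros t. apply (ideal_countable_family (fun c => F (t, c))); auto.
  - exists y; split; auto. intros [t c] Ft. apply (Hy t). exists c; auto.
Qed.

Lemma avoidable_nat : avoidable nat.
Proof.
  intros F HF. apply NNPP; intro no. apply (ideal_proper _ _ HI).
  apply (ideal_subset _ _ HI _ (fun y => exists k, F k y)); [|apply HI; auto].
  intros x Hx. apply NNPP; intro nx. apply no. exists x; split; auto. intros k Fk. apply nx; eauto.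
Qed.

Lemma K_not_avoidable : ~ avoidable K.
Proof.
  intros S. destruct (proj1 Hcov) as [F [HF Hc]]. destruct (S F HF) as [y [Ry Hy]].
  destruct (Hc y Ry) as [k Fk]. apply (Hy k Fk).
Qed.

Fixpoint lincomb (x : K -> nat -> R) (l : list (K * Q)) : nat -> R :=
  match l with
  | nil => fun _ => 0
  | p :: l' => fun i => Q2R (snd p) * x (fst p) i + lincomb x l' i
  end.

Lemma lincomb_Rn x : (forall k, Rn n (x k)) -> forall l, Rn n (lincomb x l).
Proof. intros hx l i hi. induction l as [|p l IH]; simpl; auto. rewrite IH, (hx (fst p) i hi). ring. Qed.

Lemma lincomb_app x l1 l2 i : lincomb x (l1 ++ l2) i = lincomb x l1 i + lincomb x l2 i.
Proof. induction l1 as [|p l IH]; simpl; [|rewrite IH]; ring. Qed.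

Lemma lincomb_scal x q l i :
  lincomb x (map (fun p => (fst p, (q * snd p)%Q)) l) i = Q2R q * lincomb x l i.
Proof. induction l as [|p l IH]; simpl; [ring|]. rewrite IH, Q2R_mult. ring. Qed.

Lemma lincomb_single x k : x k = lincomb x ((k, 1%Q) :: nil).
Proof. apply functional_extensionality; intros i; simpl. unfold Q2R; simpl. field. Qed.

Lemma lincomb_split x g l : exists l' q, (forall p, In p l' -> In p l /\ fst p <> g) /\
  forall i, lincomb x l i = Q2R q * x g i + lincomb x l' i.
Proof.
  induction l as [|p l [l' [q [h1 h2]]]].
  - exists nil, 0%Q. split; [simpl; tauto|]. intros i; simpl. unfold Q2R; simpl. field.
  - destruct (classic (fst p = g)) as [e|ne].
    + exists l', (snd p + q)%Q. split.
      * intros p' hp'. destruct (h1 p' hp'); simpl; auto.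
      * intros i. simpl. rewrite h2, Q2R_plus, e. ring.
    + exists (p :: l'), q. split.
      * intros p' [e|hp']; [subst; simpl; auto|]. destruct (h1 p' hp'); simpl; auto.
      * intros i. simpl. rewrite h2. ring.
Qed.

Section Recursion.
Variable lt : K -> K -> Prop.
Hypothesis Hlt : strict_well_order lt.
Hypothesis Hsegs : forall g, ~ le_card K {d | lt d g}.
Variable B : K -> pset.
Hypothesis HB : forall k, in_ideal I n (B k).

Definition segment (g : K) := {d | lt d g}.

(* Finite lists from an initial segment are avoidable: they are countable, or by
   Hessenberg's theorem no more numerous than the segment, which is smaller than [K]. *)
Lemma avoidable_segment_lists g : avoidable (list (segment g)).
Proof.
  destruct (le_card_total nat (segment g)) as [h|h].
  - apply (avoidable_le _ (segment g)); [apply list_le_card, h|apply avoidable_of_lt, Hsegs].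
  - apply (avoidable_le _ nat); [apply countable_list, h|apply avoidable_nat].
Qed.

Definition combo g (x : K -> nat -> R) (ks : list (segment g)) (qs : list Q) : nat -> R :=
  lincomb x (combine (map (@proj1_sig _ _) ks) qs).

Definition stage_index (g : K) := (list (segment g) * ((list Q * Q) * bool))%type.

(* The sets the point of stage [g] must avoid: the span of the earlier points (flag false),
   and, for each earlier [b], rational [q <> 0] and [v] in that span, the set of [y] with
   [q y + v] in [B b] (flag true). *)
Definition forbidden g (x : K -> nat -> R) (t : stage_index g) : pset :=
  match t with (ks, ((qs, q), flag)) =>
    if flag then
      match ks with
      | nil => fun _ => False
      | b :: ks' => fun y => Q2R q <> 0 /\ Rn n y /\ B (proj1_sig b) (fun i => Q2R q * y i + combo g x ks' qs i)
      end
    else fun y => Rn n y /\ y = combo g x ks qs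
  end.

(* Every forbidden set is in the ideal, by affine invariance. *)
Lemma forbidden_in_ideal g x t : in_ideal I n (forbidden g x t).
Proof.
  destruct t as [ks [[qs q] [|]]]; simpl.
  - destruct ks as [|b ks']; [apply ideal_empty|].
    destruct (Req_dec (Q2R q) 0) as [e|ne].
    + apply (ideal_subset _ _ HI _ (fun _ => False)); [tauto|apply ideal_empty].
    + apply (ideal_subset _ _ HI _ (fun y => Rn n y /\ B (proj1_sig b) (fun i => Q2R q * y i + combo g x ks' qs i)));
        [tauto|apply HI; auto].
  - destruct (classic (Rn n (combo g x ks qs))) as [h|h].
    + apply (ideal_subset _ _ HI _ (fun y => y = combo g x ks qs)); [tauto|apply HI; auto].
    + apply (ideal_subset _ _ HI _ (fun _ => False)); [|apply ideal_empty]. intros y [r e]; subst; auto.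
Qed.

Lemma avoidable_stage_index g : avoidable (stage_index g).
Proof.
  apply avoidable_prod_countable; [apply avoidable_segment_lists|].
  apply countable_prod; [apply countable_prod; [apply countable_list, countable_Q|apply countable_Q]|].
  apply countable_bool.
Qed.

Definition restrict g (rec : forall d, lt d g -> nat -> R) : K -> nat -> R := fun d =>
  match excluded_middle_informative (lt d g) with left h => rec d h | right _ => fun _ => 0 end.

Definition choose_point g (rec : forall d, lt d g -> nat -> R) : nat -> R :=
  epsilon (inhabits (fun _ => 0))
    (fun y => Rn n y /\ forall t : stage_index g, ~ forbidden g (restrict g rec) t y).

Definition points : K -> nat -> R := Fix (swo_wf lt Hlt) (fun _ => nat -> R) choose_point.

Lemma points_eq g : points g = choose_point g (fun d _ => points d).
Proof.
  unfold points. refine (Fix_eq (swo_wf lt Hlt) (fun _ => nat -> R) choose_point _ g).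
  intros g' f1 f2 E. unfold choose_point.
  replace (restrict g' f1) with (restrict g' f2); auto.
  apply functional_extensionality; intros d; unfold restrict.
  destruct (excluded_middle_informative (lt d g')); auto.
Qed.

Lemma combo_restrict g ks qs : combo g (restrict g (fun d _ => points d)) ks qs = combo g points ks qs.
Proof.
  unfold combo. revert qs. induction ks as [|k ks IH]; intros [|q qs]; simpl; auto.
  rewrite IH. unfold restrict. destruct (excluded_middle_informative (lt (proj1_sig k) g)) as [h|h]; auto.
  exfalso; apply h, (proj2_sig k).
Qed.

Lemma points_spec g : Rn n (points g) /\ forall t : stage_index g, ~ forbidden g points t (points g).
Proof.
  assert (Fr : forall t, forbidden g (restrict g (fun d _ => points d)) t = forbidden g points t).
  { intros [ks [[qs q] [|]]]; simpl; [destruct ks as [|b ks']; auto|]; rewrite combo_restrict; auto. }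
  assert (ex : exists y, Rn n y /\ forall t : stage_index g, ~ forbidden g (restrict g (fun d _ => points d)) t y)
    by (apply avoidable_stage_index; intros t; apply forbidden_in_ideal).
  pose proof (epsilon_spec (inhabits (fun _ => 0)) _ ex) as sp.
  fold (choose_point g (fun d _ => points d)) in sp. rewrite <- points_eq in sp.
  destruct sp as [r sp]. split; auto. intros t; rewrite <- Fr; auto.
Qed.

Lemma points_Rn k : Rn n (points k).
Proof. apply points_spec. Qed.

Lemma list_below g (l : list (K * Q)) : (forall p, In p l -> lt (fst p) g) ->
  exists (ks : list (segment g)) qs, combine (map (@proj1_sig _ _) ks) qs = l.
Proof.
  induction l as [|[k q] l IH]; intros H; [exists nil, nil; auto|].
  destruct IH as [ks [qs E]]; [intros p hp; apply H; simpl; auto|].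
  exists (exist _ k (H (k, q) (or_introl eq_refl)) :: ks), (q :: qs). simpl. rewrite E. auto.
Qed.

Lemma point_not_in_span g l : (forall p, In p l -> lt (fst p) g) -> points g <> lincomb points l.
Proof.
  intros hl E. destruct (list_below g l hl) as [ks [qs E']].
  apply ((proj2 (points_spec g)) (ks, ((qs, 0%Q), false))). simpl.
  unfold combo. rewrite E'. split; auto. apply points_Rn.
Qed.

Lemma point_avoids_B b g l q : lt b g -> (forall p, In p l -> lt (fst p) g) -> Q2R q <> 0 ->
  ~ B b (fun i => Q2R q * points g i + lincomb points l i).
Proof.
  intros hb hl hq HBb. destruct (list_below g l hl) as [ks [qs E]].
  apply ((proj2 (points_spec g)) (exist _ b hb :: ks, ((qs, q), true))). simpl.
  unfold combo. rewrite E. repeat split; auto. apply points_Rn.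
Qed.

Lemma list_max (l : list (K * Q)) : l <> nil ->
  exists m, (exists p, In p l /\ fst p = m) /\ forall p, In p l -> fst p = m \/ lt (fst p) m.
Proof.
  induction l as [|p [|p1 l1] IH]; intros ne; [congruence| |].
  - exists (fst p). split; [exists p; simpl; auto|]. intros p' [e|[]]; subst; auto.
  - destruct IH as [m [[p0 [hp0 e0]] hm]]; [discriminate|].
    destruct (swo_total lt Hlt (fst p) m) as [h|[h|h]].
    + exists m. split; [exists p0; simpl; auto|]. intros p' [e|hp']; [subst; auto|auto].
    + exists m. split; [exists p0; simpl; auto|]. intros p' [e|hp']; [subst; auto|auto].
    + exists (fst p). split; [exists p; simpl; auto|]. intros p' [e|hp']; [subst; auto|].
      right. destruct (hm p' hp') as [e|e]; [rewrite e; auto|eapply (swo_trans lt Hlt); eauto].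
Qed.

Definition span : pset := fun y => exists l, y = lincomb points l.

Definition spanned_upto (b : K) (y : nat -> R) : Prop :=
  exists l, (forall p, In p l -> fst p = b \/ lt (fst p) b) /\ y = lincomb points l.

(* By
   induction on the largest stage [g] involved: if [g] is above [b], its coefficient must
   vanish since the point of stage [g] was chosen to avoid such combinations. *)
Lemma span_B_upto_aux b g : forall l, (forall p, In p l -> fst p = g \/ lt (fst p) g) ->
  B b (lincomb points l) -> spanned_upto b (lincomb points l).
Proof.
  induction g as [g IH] using (well_founded_ind (swo_wf lt Hlt)). intros l hl hB.
  destruct (swo_total lt Hlt g b) as [h|[<-|h]].
  - exists l. split; auto. intros p hp. right.
    destruct (hl p hp) as [->|e]; [auto|eapply (swo_trans lt Hlt); eauto].
  - exists l; auto.
  - destruct (lincomb_split points g l) as [l' [q [h1 h2]]].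
    assert (hlt : forall p, In p l' -> lt (fst p) g).
    { intros p hp. destruct (h1 p hp) as [hp' ne]. destruct (hl p hp') as [e|e]; auto; contradiction. }
    assert (E : lincomb points l = fun i => Q2R q * points g i + lincomb points l' i)
      by (apply functional_extensionality; auto).
    destruct (Req_dec (Q2R q) 0) as [z|nz].
    + assert (E' : lincomb points l = lincomb points l').
      { rewrite E. apply functional_extensionality; intros i. rewrite z; ring. }
      rewrite E' in hB |- *. destruct l' as [|p0 l0]; [exists nil; split; [simpl; tauto|reflexivity]|].
      destruct (list_max (p0 :: l0)) as [m [[p1 [hp1 e1]] hm]]; [discriminate|].
      apply (IH m); auto. rewrite <- e1; apply hlt; auto.
    + exfalso. apply (point_avoids_B b g l' q h hlt nz). rewrite <- E. auto.
Qed.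

Lemma span_B_upto b y : span y -> B b y -> spanned_upto b y.
Proof.
  intros [l ->] hB. destruct l as [|p0 l0]; [exists nil; simpl; split; [tauto|reflexivity]|].
  destruct (list_max (p0 :: l0)) as [m [_ hm]]; [discriminate|].
  apply (span_B_upto_aux b m); auto.
Qed.

Lemma spanned_upto_combo b y : spanned_upto b y -> exists (ks : list (segment b)) qs q0,
  y = fun i => Q2R q0 * points b i + combo b points ks qs i.
Proof.
  intros [l [hl ->]]. destruct (lincomb_split points b l) as [l' [q [h1 h2]]].
  destruct (list_below b l') as [ks [qs E]].
  { intros p hp. destruct (h1 p hp) as [hp' ne]. destruct (hl p hp') as [e|e]; auto; contradiction. }
  exists ks, qs, q. apply functional_extensionality; intros i. rewrite h2. unfold combo; rewrite E; auto.
Qed.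

Lemma span_Q_subspace : Q_subspace n span.
Proof.
  split; [|split; [|split]].
  - intros y [l ->]. apply lincomb_Rn, points_Rn.
  - exists nil; reflexivity.
  - intros y z [l1 ->] [l2 ->]. exists (l1 ++ l2). apply functional_extensionality; intros i.
    rewrite lincomb_app; auto.
  - intros q y [l ->]. exists (map (fun p => (fst p, (q * snd p)%Q)) l).
    apply functional_extensionality; intros i. rewrite lincomb_scal; auto.
Qed.

(* The points are pairwise distinct, so the span has at least |K| elements. *)
Lemma span_large : le_card K {y | span y}.
Proof.
  exists (fun k => exist span (points k) (ex_intro _ _ (lincomb_single points k))).
  intros u v E. apply (f_equal (@proj1_sig _ _)) in E. simpl in E.
  destruct (swo_total lt Hlt u v) as [h|[h|h]]; auto; exfalso.
  - apply (point_not_in_span v ((u, 1%Q) :: nil)); [intros p [<-|[]]; auto|].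
    rewrite <- lincomb_single; auto.
  - apply (point_not_in_span u ((v, 1%Q) :: nil)); [intros p [<-|[]]; auto|].
    rewrite <- lincomb_single; auto.
Qed.

(* The part of the span inside [B b] injects into the stage-[b] indices, hence is small. *)
Lemma span_B_small b : ~ le_card K {y | span y /\ B b y}.
Proof.
  intros hK. apply K_not_avoidable, (avoidable_le K _ hK), (avoidable_le _ (stage_index b));
    [|apply avoidable_stage_index].
  set (describes := fun (z : {y | span y /\ B b y}) (t : stage_index b) =>
         match t with (ks, ((qs, q0), _)) => proj1_sig z = fun i => Q2R q0 * points b i + combo b points ks qs i end).
  assert (ex : forall z, exists t, describes z t).
  { intros [y [hy hy']]. destruct (spanned_upto_combo b y (span_B_upto b y hy hy')) as [ks [qs [q0 e]]].
    exists (ks, ((qs, q0), true)). exact e. }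
  set (inh := inhabits ((nil, ((nil, 0%Q), true)) : stage_index b)).
  exists (fun z => epsilon inh (describes z)).
  intros u v E. pose proof (epsilon_spec inh _ (ex u)) as su. pose proof (epsilon_spec inh _ (ex v)) as sv.
  rewrite E in su. apply sig_eq. destruct (epsilon inh (describes v)) as [ks [[qs q0] fl]].
  simpl in su, sv. rewrite su, sv; auto.
Qed.

(* The span is a |K|-Luzin set, because every ideal set lies in some [B b]. *)
Lemma span_luzin (Bcof : forall A, in_ideal I n A -> exists k, forall x, A x -> B k x) :
  Luzin I n K span.
Proof.
  split; [intros y [l ->]; apply lincomb_Rn, points_Rn|split; [apply span_large|]].
  intros A hA. destruct (Bcof A hA) as [b hb].
  assert (small : ~ le_card K {y | span y /\ A y}).
  { intros h. apply (span_B_small b). eapply le_card_trans; [exact h|].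
    exists (fun z => exist (fun y => span y /\ B b y) (proj1_sig z)
                      (conj (proj1 (proj2_sig z)) (hb _ (proj2 (proj2_sig z))))).
    intros u v E. apply sig_eq. apply (f_equal (@proj1_sig _ _)) in E. exact E. }
  split; [|exact small].
  destruct (le_card_total {y | span y /\ A y} K) as [h|h]; [exact h|contradiction].
Qed.

End Recursion.

Theorem luzin_subspace_exists : cof_is I n K -> exists H : pset, Q_subspace n H /\ Luzin I n K H.
Proof.
  intros Hcof. destruct (initial_well_order K) as [lt [Hlt Hsegs]].
  destruct (proj1 Hcof) as [B [HB Bcof]].
  exists (span lt Hlt B). split; [apply (span_Q_subspace lt Hlt Hsegs B HB)|apply (span_luzin lt Hlt Hsegs B HB Bcof)].
Qed.

End Construction.

Theorem theorem2p5 (n : nat) (I : ideal_kind) (K : Type) :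
  (1 <= n)%nat -> cov_is I n K -> cof_is I n K ->
  exists H : pset, Q_subspace n H /\ Luzin I n K H.
Proof.
  intros hn hcov hcof.
  assert (HI : admissible_ideal (in_ideal I n) n)
    by (destruct I; [apply admissible_null|apply admissible_meager]; auto).
  exact (luzin_subspace_exists n I K HI hcov hcof).
Qed.
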